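(* Let $R$ be a reduced elliptic root system of rank $l$ in $\mathcal V$ and let $\Pi\cup\{a\}$ be a fundamental-set of $R$; let $\pi_a:\mathcal V\to\mathcal V/\mathbb Ra$ be the canonical map. (1) For every $\alpha\in R$, $(\alpha+(\mathbb Z\setminus\{0\})a)\cap R\neq\emptyset$. (2) Let $S$ be a non-empty proper connected subset of $\Pi$, put $\mathcal V^S=\mathbb RS\oplus\mathbb Ra$ and $R^S=R\cap\mathcal V^S$. Then $(R^S,\mathcal V^S)$ is a reduced affine root system, $\pi_a(R^S)$ is an irreducible finite root system with base $\pi_a(S)$, and $\mathbb ZR^S=\mathbb ZS\oplus\mathbb Zk_Sa$ for some $k_S\in\mathbb N$.
   Context: Let $\mathcal V$ be a real vector space of dimension $l+2$ with a positive semi-definite symmetric bilinear form $(\,,\,)$ whose radical $\mathcal V^0=\{v:(v,v)=0\}$ has dimension $2$. For $(v,v)\ne0$ set $v^\vee=2v/(v,v)$, $s_v(z)=z-(v^\vee,z)v$. A set $S\subset\mathcal V\setminus\mathcal V^0$ is connected if there is no non-empty proper $S'\subset S$ with $(S',S\setminus S')=\{0\}$. An extended affine root system in a real space $\mathcal V$ with positive semidefinite form, rank $l$ and nullity $n=\dim\mathcal V^0$ ($\dim\mathcal V=l+n$), is a subset $R$ with: $R\subset\mathcal V\setminus\mathcal V^0$, $\mathbb RR=\mathcal V$; $\mathbb ZR$ free of rank $l+n$; $(\alpha^\vee,\beta)\in\mathbb Z$ for $\alpha,\beta\in R$; $s_\alpha(R)=R$ for $\alpha\in R$; $R$ connected.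 Nullity $0$: irreducible finite root system; nullity $1$: affine root system; nullity $2$: elliptic root system. $R$ is reduced if $R\cap 2R=\emptyset$. For nullity $0$ or $1$, a base of $R$ is a set $\Pi\subset R$ of $l+n$ linearly independent elements with $R=(R\cap\mathbb Z_{\ge0}\Pi)\cup(R\cap\mathbb Z_{\le0}\Pi)$. A fundamental-set of an elliptic root system $R$ is a subset $\Pi\cup\{a\}\subset\mathbb ZR$ with: $a\in\mathbb ZR\cap\mathcal V^0$ and there is $b$ with $\mathbb ZR\cap\mathcal V^0=\mathbb Za\oplus\mathbb Zb$; $\Pi\subset R$, $|\Pi|=l+1$, and $\pi_a(\Pi)$ is a base of the affine root system $\pi_a(R)\subset\mathcal V/\mathbb Ra$. *)

From Stdlib Require Import Reals List ZArith.
From Stdlib Require Fin.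
Open Scope R_scope.
Set Implicit Arguments.

Definition vec (n : nat) := Fin.t n -> R.
Definition vzero {n} : vec n := fun _ => 0.
Definition vadd {n} (x y : vec n) : vec n := fun i => x i + y i.
Definition vscal {n} (t : R) (x : vec n) : vec n := fun i => t * x i.
Definition vsub {n} (x y : vec n) : vec n := fun i => x i - y i.

Fixpoint lc {n} (c : nat -> R) (ps : list (vec n)) : vec n :=
  match ps with
  | nil => vzero
  | p :: ps' => vadd (vscal (c O) p) (lc (fun i => c (S i)) ps')
  end.

Definition zc (c : nat -> Z) : nat -> R := fun i => IZR (c i).

Definition psd_form {n} (B : vec n -> vec n -> R) : Prop :=
  (forall x y, B x y = B y x) /\
  (forall x y z, B (vadd x y) z = B x z + B y z) /\
  (forall t x z, B (vscal t x) z = t * B x z) /\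
  (forall x, 0 <= B x x).

(** Quotients W/K (K a subspace contained in the radical) are modelled by
    representatives: x and y represent the same class iff x - y lies in K. *)
Definition Kzero {n} : vec n -> Prop := fun v => v = vzero.
Definition Kline {n} (a : vec n) : vec n -> Prop := fun v => exists t, v = vscal t a.
Definition eqmod {n} (K : vec n -> Prop) (x y : vec n) : Prop := K (vsub x y).
(** pi_K x belongs to pi_K(P) *)
Definition in_mod {n} (K : vec n -> Prop) (P : vec n -> Prop) (x : vec n) : Prop :=
  exists r, P r /\ eqmod K x r.

Definition rspan {n} (P : vec n -> Prop) (v : vec n) : Prop :=
  exists (ps : list (vec n)) (c : nat -> R), Forall P ps /\ v = lc c ps.
Definition zspan {n} (P : vec n -> Prop) (v : vec n) : Prop :=
  exists (ps : list (vec n)) (c : nat -> Z), Forall P ps /\ v = lc (zc c) ps.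

Definition indep_mod {n} (K : vec n -> Prop) (ps : list (vec n)) : Prop :=
  forall c : nat -> R, K (lc c ps) -> forall i, (i < length ps)%nat -> c i = 0.
Definition Zindep_mod {n} (K : vec n -> Prop) (ps : list (vec n)) : Prop :=
  forall c : nat -> Z, K (lc (zc c) ps) -> forall i, (i < length ps)%nat -> c i = 0%Z.

Definition dim_mod {n} (K : vec n -> Prop) (W : vec n -> Prop) (m : nat) : Prop :=
  exists bs : list (vec n), length bs = m /\ Forall W bs /\ indep_mod K bs /\
    forall w, W w -> exists c, eqmod K w (lc c bs).

Definition is_int (x : R) : Prop := exists k : Z, x = IZR k.

Definition cpair {n} (B : vec n -> vec n -> R) (v z : vec n) : R := 2 * B v z / B v v.
Definition refl {n} (B : vec n -> vec n -> R) (v z : vec n) : vec n :=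
  vsub z (vscal (cpair B v z) v).

(** pi_K(P) is connected: no non-empty proper subset P' of pi_K(P) with
    (P', pi_K(P) \ P') = 0.  Subsets of pi_K(P) are given by predicates on P
    that are invariant under equality mod K. *)
Definition connected_mod {n} (B : vec n -> vec n -> R) (K : vec n -> Prop)
  (P : vec n -> Prop) : Prop :=
  ~ exists P' : vec n -> Prop,
      (forall x y, P x -> P y -> eqmod K x y -> (P' x <-> P' y)) /\
      (exists x, P x /\ P' x) /\ (exists x, P x /\ ~ P' x) /\
      (forall x y, P x -> P y -> P' x -> ~ P' y -> B x y = 0).

(** (pi_K(Rt), W/K) is an extended affine root system of rank l and nullity m
    (the form on W/K is induced by B). *)
Definition ears_mod {n} (B : vec n -> vec n -> R) (K W Rt : vec n -> Prop)
  (l m : nat) : Prop :=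
  (forall r, Rt r -> W r /\ B r r <> 0) /\
  (forall w, W w -> exists v, rspan Rt v /\ eqmod K w v) /\
  dim_mod K W (l + m) /\
  dim_mod K (fun w => W w /\ B w w = 0) m /\
  (exists bs : list (vec n), length bs = (l + m)%nat /\
     Forall (in_mod K (zspan Rt)) bs /\
     (forall z, zspan Rt z -> exists c : nat -> Z, eqmod K z (lc (zc c) bs)) /\
     Zindep_mod K bs) /\
  (forall al be, Rt al -> Rt be -> is_int (cpair B al be)) /\
  (forall al be, Rt al -> Rt be -> in_mod K Rt (refl B al be)) /\
  (forall al ga, Rt al -> Rt ga -> exists be, Rt be /\ eqmod K (refl B al be) ga) /\
  connected_mod B K Rt.

Definition reduced_mod {n} (K Rt : vec n -> Prop) : Prop :=
  ~ exists al be, Rt al /\ Rt be /\ eqmod K al (vscal 2 be).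

Definition base_mod {n} (K Rt : vec n -> Prop) (l m : nat) (Pi : list (vec n)) : Prop :=
  length Pi = (l + m)%nat /\ Forall (in_mod K Rt) Pi /\ indep_mod K Pi /\
  forall r, Rt r -> exists c : nat -> Z,
     ((forall i, (0 <= c i)%Z) \/ (forall i, (c i <= 0)%Z)) /\ eqmod K r (lc (zc c) Pi).

Definition full {n} : vec n -> Prop := fun _ => True.

Definition elliptic {n} (B : vec n -> vec n -> R) (Rt : vec n -> Prop) (l : nat) : Prop :=
  ears_mod B Kzero full Rt l 2.

Definition fundamental_set {n} (B : vec n -> vec n -> R) (Rt : vec n -> Prop) (l : nat)
  (Pi : list (vec n)) (a : vec n) : Prop :=
  zspan Rt a /\ B a a = 0 /\
  (exists b, Zindep_mod Kzero (a :: b :: nil) /\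
     forall v, (zspan Rt v /\ B v v = 0) <->
       exists p q : Z, v = vadd (vscal (IZR p) a) (vscal (IZR q) b)) /\
  Forall Rt Pi /\ NoDup Pi /\ length Pi = S l /\
  ears_mod B (Kline a) full Rt l 1 /\
  base_mod (Kline a) Rt l 1 Pi.

(** Modulo [Ra] every root is [Σ c_i π_i] with all [c_i] of one sign, so every
    root can be written [α = Σ c_i π_i + t a].

    Reflections in [b] and [b + x] (with [x] null) compose to the
    translation [d ↦ d + (b^∨, d) x]; by connectivity of [R] this propagates
    "some non-zero multiple of [s a] translates roots to roots" from one pair
    [b, b + s a] of roots to every root ([Good_of_pair]).  Descending along
    simple reflections, the null part [t] of every root is such a "good"
    translation ([good_null_part]); good translations form a [Z]-module, and
    [a ∈ ZR] forces [1] to be good, which is (1).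

    Part (2).  [Pi] is an obtuse, connected, linearly independent family
    modulo [a]; hence the form is positive definite on the span of every
    proper subset of [Pi] ([pos_def]).  For [S ⊊ Pi] connected, this identifies
    the null vectors of [V^S = RS ⊕ Ra] with [Ra], and the base property of
    [Pi] restricts to [S].  The axioms of an affine root system for [R^S] are
    then checked one by one; the lattice [ZR^S ∩ Ra] is a subgroup of [Za]
    (integrality of the null lattice of [R]), hence cyclic, giving [k_S]. *)

From Stdlib Require Import Reals List ZArith Lra Lia Classical FunctionalExtensionality ClassicalEpsilon.
Open Scope R_scope.

Lemma vext {n} (x y : vec n) : (forall i, x i = y i) -> x = y.
Proof. intros; apply functional_extensionality; auto. Qed.

Ltac vring := apply vext; intro; unfold vadd, vscal, vsub, vzero; simpl; ring.

Lemma vec_at {n} (x y : vec n) k : x = y -> x k = y k.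
Proof. intros ->; reflexivity. Qed.

Lemma vscal_eq0 {n} (a : vec n) t : a <> vzero -> vscal t a = vzero -> t = 0.
Proof.
  intros Ha0 E. apply NNPP; intro Ht. apply Ha0. apply vext; intro k.
  apply (vec_at _ _ k) in E. unfold vscal, vzero in *.
  destruct (Rmult_integral _ _ E); [contradiction | auto].
Qed.

Fixpoint sumR (n : nat) (f : nat -> R) : R :=
  match n with O => 0 | S m => sumR m f + f m end.

Lemma sumR_shift n f : sumR (S n) f = f O + sumR n (fun i => f (S i)).
Proof. induction n; simpl in *. ring. rewrite IHn. ring. Qed.

Lemma sumR_ext n f g : (forall i, (i < n)%nat -> f i = g i) -> sumR n f = sumR n g.
Proof. induction n; intros H; simpl; auto. rewrite IHn, H; auto. Qed.

Lemma sumR_zero n f : (forall i, (i < n)%nat -> f i = 0) -> sumR n f = 0.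
Proof. induction n; intros H; simpl; auto. rewrite IHn, H; auto; ring. Qed.

Lemma sumR_scal n t f : sumR n (fun i => t * f i) = t * sumR n f.
Proof. induction n; simpl; [ring|rewrite IHn; ring]. Qed.

Lemma sumR_le m f g : (forall i, (i < m)%nat -> f i <= g i) -> sumR m f <= sumR m g.
Proof. induction m; intros H; simpl. lra. assert (f m <= g m) by auto. assert (sumR m f <= sumR m g) by auto. lra. Qed.

Lemma sumR_nonpos n f : (forall i, (i < n)%nat -> f i <= 0) -> sumR n f <= 0.
Proof. intro H. rewrite <- (sumR_zero n (fun _ => 0)) by auto. apply sumR_le; auto. Qed.

Lemma sumR_zero_nonpos n f : (forall i, (i < n)%nat -> f i <= 0) -> sumR n f = 0 ->
  forall i, (i < n)%nat -> f i = 0.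
Proof.
  induction n; intros H Hs i Hi. lia. simpl in Hs.
  assert (f n <= 0) by auto. assert (sumR n f <= 0) by (apply sumR_nonpos; auto).
  destruct (Nat.eq_dec i n). subst; lra. apply IHn; auto. lra. lia.
Qed.

Lemma sumR_single n f i : (i < n)%nat -> (forall j, (j < n)%nat -> j <> i -> f j = 0) -> sumR n f = f i.
Proof.
  induction n; intros Hi H. lia. simpl. destruct (Nat.eq_dec i n).
  - subst. rewrite sumR_zero by (intros; apply H; lia). ring.
  - rewrite IHn, (H n); try lia. ring. intros; apply H; lia.
Qed.

Fixpoint sumN (n : nat) (f : nat -> nat) : nat :=
  match n with O => O | S m => (sumN m f + f m)%nat end.

Lemma sumN_ge n f i : (i < n)%nat -> (f i <= sumN n f)%nat.
Proof. induction n; intros Hi; simpl. lia. destruct (Nat.eq_dec i n). subst; lia. specialize (IHn ltac:(lia)). lia. Qed.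

Lemma sumN_lt n f g : (forall j, (j < n)%nat -> (f j <= g j)%nat) ->
  (exists i, (i < n)%nat /\ (f i < g i)%nat) -> (sumN n f < sumN n g)%nat.
Proof.
  induction n; intros H [i [Hi Hl]]. lia. simpl.
  assert (Hm : forall m, (m <= n)%nat -> (sumN m f <= sumN m g)%nat).
  { induction m; simpl; intros; [lia|]. specialize (IHm ltac:(lia)). specialize (H m ltac:(lia)). lia. }
  destruct (Nat.eq_dec i n). subst. specialize (Hm n (le_n _)). lia.
  assert (sumN n f < sumN n g)%nat by (apply IHn; [intros; apply H; lia| exists i; split; auto; lia]).
  specialize (H n ltac:(lia)). lia.
Qed.

Section LinComb.
Context {n : nat}.

Lemma lc_ext (c d : nat -> R) (L : list (vec n)) :
  (forall i, (i < length L)%nat -> c i = d i) -> lc c L = lc d L.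
Proof.
  revert c d; induction L; intros c d H; simpl; auto.
  rewrite (H O) by (simpl; lia). rewrite (IHL (fun i => c (S i)) (fun i => d (S i))); auto.
  intros; apply H; simpl; lia.
Qed.

Lemma lc_add (c d : nat -> R) (L : list (vec n)) :
  lc (fun i => c i + d i) L = vadd (lc c L) (lc d L).
Proof.
  revert c d; induction L; intros; simpl. vring.
  rewrite IHL. apply vext; intro; unfold vadd, vscal; ring.
Qed.

Lemma lc_scal t (c : nat -> R) (L : list (vec n)) :
  lc (fun i => t * c i) L = vscal t (lc c L).
Proof.
  revert c; induction L; intros; simpl. vring.
  rewrite IHL. apply vext; intro; unfold vadd, vscal; ring.
Qed.

Lemma lc_zero (L : list (vec n)) : lc (fun _ => 0) L = vzero.
Proof. induction L; simpl; auto. rewrite IHL. vring. Qed.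

Lemma lc_vanish (c : nat -> R) (L : list (vec n)) :
  (forall i, (i < length L)%nat -> c i = 0) -> lc c L = vzero.
Proof. intro H. rewrite (lc_ext c (fun _ => 0)); auto. apply lc_zero. Qed.

Lemma lc_app (c : nat -> R) (L1 L2 : list (vec n)) :
  lc c (L1 ++ L2) = vadd (lc c L1) (lc (fun i => c (length L1 + i)%nat) L2).
Proof.
  revert c; induction L1; intros; simpl. apply vext; intro; unfold vadd, vzero; rewrite Rplus_0_l; reflexivity.
  rewrite IHL1. apply vext; intro; unfold vadd, vscal; ring.
Qed.

Definition snoc_coef (len : nat) (d : nat -> R) (t : R) : nat -> R :=
  fun i => if Nat.ltb i len then d i else t.

Lemma lc_snoc (d : nat -> R) t (L : list (vec n)) v :
  lc (snoc_coef (length L) d t) (L ++ v :: nil) = vadd (lc d L) (vscal t v).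
Proof.
  rewrite lc_app. rewrite (lc_ext _ d L) by (intros i Hi; unfold snoc_coef; apply Nat.ltb_lt in Hi; rewrite Hi; auto).
  cbn [lc]. unfold snoc_coef. replace (Nat.ltb (length L + 0) (length L)) with false by (symmetry; apply Nat.ltb_ge; lia).
  vring.
Qed.

Lemma lc_app_single (c : nat -> R) (L : list (vec n)) v :
  lc c (L ++ v :: nil) = vadd (lc c L) (vscal (c (length L)) v).
Proof. rewrite lc_app. simpl. rewrite Nat.add_0_r. vring. Qed.

Lemma lc_pt (c : nat -> R) (L : list (vec n)) k :
  lc c L k = sumR (length L) (fun i => c i * nth i L vzero k).
Proof.
  revert c; induction L; intros. reflexivity.
  cbn [lc length]. rewrite sumR_shift. unfold vadd, vscal. rewrite IHL. simpl. ring.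
Qed.

Definition indv (i : nat) : nat -> R := fun j => if Nat.eqb j i then 1 else 0.

Lemma lc_ind (L : list (vec n)) i : (i < length L)%nat -> lc (indv i) L = nth i L vzero.
Proof.
  intro Hi. apply vext; intro k. rewrite lc_pt.
  rewrite (sumR_single _ _ i Hi). unfold indv. rewrite Nat.eqb_refl. ring.
  intros j _ Hj. unfold indv. apply Nat.eqb_neq in Hj. rewrite Hj. ring.
Qed.

Lemma lc_single (L : list (vec n)) c i : (i < length L)%nat ->
  (forall j, (j < length L)%nat -> j <> i -> c j = 0) -> lc c L = vscal (c i) (nth i L vzero).
Proof.
  intros Hi H. rewrite (lc_ext c (fun j => c i * indv i j)). rewrite lc_scal, lc_ind; auto.
  intros j Hj. unfold indv. destruct (Nat.eqb_spec j i). subst; ring. rewrite H; auto; ring.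
Qed.

End LinComb.

Section Form.
Context {n : nat} (B : vec n -> vec n -> R) (HB : psd_form B).

Lemma Bsym x y : B x y = B y x. Proof. apply HB. Qed.
Lemma Baddl x y z : B (vadd x y) z = B x z + B y z. Proof. apply HB. Qed.
Lemma Bscall t x z : B (vscal t x) z = t * B x z. Proof. apply HB. Qed.
Lemma Bpos x : 0 <= B x x. Proof. apply HB. Qed.
Lemma Baddr x y z : B z (vadd x y) = B z x + B z y.
Proof. rewrite Bsym, Baddl, (Bsym x), (Bsym y); auto. Qed.
Lemma Bscalr t x z : B z (vscal t x) = t * B z x.
Proof. rewrite Bsym, Bscall, (Bsym x); auto. Qed.
Lemma Bzerol z : B vzero z = 0.
Proof. replace (@vzero n) with (vscal 0 (@vzero n)) by vring. rewrite Bscall; ring. Qed.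
Lemma Bsubl x y z : B (vsub x y) z = B x z - B y z.
Proof. replace (vsub x y) with (vadd x (vscal (-1) y)) by vring. rewrite Baddl, Bscall; ring. Qed.
Lemma Bsubr x y z : B z (vsub x y) = B z x - B z y.
Proof. rewrite Bsym, Bsubl, (Bsym x), (Bsym y); auto. Qed.

Lemma Brad a x : B a a = 0 -> B a x = 0.
Proof.
  intro Ha. destruct (Req_dec (B a x) 0) as [|Hne]; auto. exfalso.
  set (t := - (B x x + 1) / (2 * B a x)).
  assert (H := Bpos (vadd x (vscal t a))).
  rewrite Baddl, !Baddr, !Bscall, !Bscalr, Ha, (Bsym x a) in H.
  assert (0 <= B x x) by apply Bpos.
  assert (Hk : t * B a x = - (B x x + 1) / 2) by (unfold t; field; auto). nra.
Qed.

Lemma Brad_r a x : B a a = 0 -> B x a = 0.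
Proof. intro Ha. rewrite Bsym. apply Brad; auto. Qed.

Lemma Blc_l c L z : B (lc c L) z = sumR (length L) (fun i => c i * B (nth i L vzero) z).
Proof.
  revert c; induction L; intros. apply Bzerol.
  cbn [lc length]. rewrite sumR_shift, Baddl, Bscall, IHL. simpl. ring.
Qed.

Lemma Blc_r c L z : B z (lc c L) = sumR (length L) (fun i => c i * B z (nth i L vzero)).
Proof. rewrite Bsym, Blc_l. apply sumR_ext; intros; rewrite Bsym; auto. Qed.

Lemma B_lc_lc c d L : B (lc c L) (lc d L) =
  sumR (length L) (fun i => c i * sumR (length L) (fun j => d j * B (nth i L vzero) (nth j L vzero))).
Proof. rewrite Blc_l. apply sumR_ext. intros i _. rewrite Blc_r. auto. Qed.

End Form.

Section Lin.
Context {n : nat}.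

Definition inspan (vs : list (vec n)) (u : vec n) := exists c, u = lc c vs.
Definition dep (us : list (vec n)) :=
  exists c, lc c us = vzero /\ exists i, (i < length us)%nat /\ c i <> 0.

Lemma inspan_lc vs us c : Forall (inspan vs) us -> inspan vs (lc c us).
Proof.
  revert c; induction us as [|u us IH]; intros c HF; simpl.
  - exists (fun _ => 0). rewrite lc_zero; auto.
  - inversion HF; subst. destruct H1 as [d Hd]. destruct (IH (fun i => c (S i)) H2) as [e He].
    exists (fun i => c O * d i + e i). rewrite lc_add, lc_scal, <- Hd, <- He. auto.
Qed.

Lemma inspan_in vs u : In u vs -> inspan vs u.
Proof.
  intro H. destruct (In_nth _ _ vzero H) as [i [Hi <-]]. exists (indv i). rewrite lc_ind; auto.
Qed.

Lemma lc_map_sub (h : vec n -> R) w c L :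
  lc c (map (fun u => vsub u (vscal (h u) w)) L) =
  vsub (lc c L) (vscal (sumR (length L) (fun i => c i * h (nth i L vzero))) w).
Proof.
  revert c; induction L as [|u L IH]; intros c.
  - simpl. vring.
  - cbn [map lc length]. rewrite sumR_shift, IH. simpl. vring.
Qed.

Lemma span_cons_coef v vs us : Forall (inspan (v :: vs)) us ->
  exists f : vec n -> R, forall u, In u us -> inspan vs (vsub u (vscal (f u) v)).
Proof.
  intro HF.
  assert (H : forall u, exists al, In u us -> inspan vs (vsub u (vscal al v))).
  { intro u. destruct (classic (In u us)) as [Hu|Hu]; [|exists 0; intro; contradiction].
    rewrite Forall_forall in HF. destruct (HF u Hu) as [c Hc].
    exists (c O). intros _. exists (fun i => c (S i)). rewrite Hc. simpl. vring. }
  exists (fun u => proj1_sig (constructive_indefinite_description _ (H u))).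
  intros u Hu. exact (proj2_sig (constructive_indefinite_description _ (H u)) Hu).
Qed.

Lemma dep_of_elim (h : vec n -> R) w l1 l2 :
  dep (map (fun u => vsub u (vscal (h u) w)) (l1 ++ l2)) -> dep (l1 ++ w :: l2).
Proof.
  intros [c [Hc [i [Hi Hci]]]]. rewrite lc_map_sub in Hc.
  set (sg := sumR (length (l1 ++ l2)) (fun i => c i * h (nth i (l1 ++ l2) vzero))) in Hc.
  set (p := length l1).
  exists (fun j => if Nat.ltb j p then c j else if Nat.eqb j p then - sg else c (j - 1)%nat).
  rewrite length_map, length_app in Hi. split.
  - rewrite lc_app. cbn [lc]. rewrite lc_app in Hc.
    rewrite (lc_ext _ c l1) by (intros j Hj; fold p in Hj; apply Nat.ltb_lt in Hj; rewrite Hj; auto).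
    fold p. replace (Nat.ltb (p + 0) p) with false by (symmetry; apply Nat.ltb_ge; lia).
    replace (Nat.eqb (p + 0) p) with true by (symmetry; apply Nat.eqb_eq; lia).
    rewrite (lc_ext _ (fun j => c (p + j)%nat) l2).
    2:{ intros j _. replace (Nat.ltb (p + S j) p) with false by (symmetry; apply Nat.ltb_ge; lia).
        replace (Nat.eqb (p + S j) p) with false by (symmetry; apply Nat.eqb_neq; lia).
        f_equal. lia. }
    fold p in Hc. apply vext; intro k. apply (vec_at _ _ k) in Hc.
    unfold vadd, vsub, vscal, vzero in *. lra.
  - rewrite length_app. simpl. destruct (Nat.ltb_spec i p).
    + exists i. split. lia. rewrite (proj2 (Nat.ltb_lt i p) H); auto.
    + exists (S i). split. fold p; lia.
      replace (Nat.ltb (S i) p) with false by (symmetry; apply Nat.ltb_ge; lia).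
      replace (Nat.eqb (S i) p) with false by (symmetry; apply Nat.eqb_neq; lia).
      replace (S i - 1)%nat with i by lia. auto.
Qed.

Lemma steinitz : forall vs us, (length vs < length us)%nat -> Forall (inspan vs) us -> dep us.
Proof.
  induction vs as [|v vs IH]; intros us Hlen HF.
  - destruct us as [|u us]; simpl in Hlen; [lia|]. inversion HF; subst.
    destruct H1 as [c Hc]. exists (indv 0). split.
    + rewrite lc_ind by (simpl; lia). simpl; auto.
    + exists O. split. simpl; lia. unfold indv; simpl; lra.
  - destruct (span_cons_coef v vs us HF) as [f Hf].
    destruct (classic (Forall (inspan vs) us)) as [HA|HA].
    { apply IH; auto. simpl in Hlen; lia. }
    apply Exists_Forall_neg in HA; [|intros; apply classic]. apply Exists_exists in HA.
    destruct HA as [w [Hw Hnw]].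
    assert (Hfw : f w <> 0).
    { intro H0. apply Hnw. destruct (Hf w Hw) as [c Hc]. exists c. rewrite <- Hc, H0. vring. }
    destruct (in_split _ _ Hw) as [l1 [l2 ->]].
    apply (dep_of_elim (fun u => f u / f w)), IH.
    + rewrite length_map, length_app. rewrite length_app in Hlen. simpl in Hlen. lia.
    + apply Forall_forall. intros x Hx. apply in_map_iff in Hx. destruct Hx as [u [<- Hu]].
      assert (Hu' : In u (l1 ++ w :: l2)) by (apply in_app_or in Hu; apply in_or_app; simpl; tauto).
      destruct (Hf u Hu') as [c Hc]. destruct (Hf w Hw) as [d Hd].
      exists (fun i => c i + (- (f u / f w)) * d i). rewrite lc_add, lc_scal, <- Hc, <- Hd.
      apply vext; intro; unfold vsub, vadd, vscal. field. auto.
Qed.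

Lemma indep_of_spanning (bs es : list (vec n)) :
  length es = length bs -> (forall u, inspan bs u) -> indep_mod Kzero es -> indep_mod Kzero bs.
Proof.
  intros Hl Hsp Hes c Hc i Hi. apply NNPP; intro Hci. unfold Kzero in Hc.
  destruct (nth_split bs vzero Hi) as [l1 [l2 [Hbs Hl1]]].
  set (x := nth i bs vzero) in *.
  assert (Hx : inspan (l1 ++ l2) x).
  { rewrite Hbs, lc_app in Hc. cbn [lc] in Hc. rewrite Hl1, Nat.add_0_r in Hc.
    exists (fun j => (- / c i) * (if Nat.ltb j i then c j else c (S j))).
    rewrite lc_scal, lc_app.
    rewrite (lc_ext _ c l1) by (intros j Hj; rewrite Hl1 in Hj; apply Nat.ltb_lt in Hj; rewrite Hj; auto).
    rewrite Hl1. rewrite (lc_ext _ (fun j => c (i + S j)%nat) l2).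
    2:{ intros j _. replace (Nat.ltb (i + j) i) with false by (symmetry; apply Nat.ltb_ge; lia). f_equal; lia. }
    apply vext; intro k. apply (vec_at _ _ k) in Hc.
    unfold vadd, vscal, vzero in *. field_simplify; auto.
    apply (Rmult_eq_reg_l (c i)); auto. field_simplify; auto. lra. }
  assert (Hall : forall u, inspan (l1 ++ l2) u).
  { intro u. destruct (Hsp u) as [d Hd]. rewrite Hd. apply inspan_lc.
    apply Forall_forall. intros y Hy. rewrite Hbs in Hy. apply in_app_or in Hy. destruct Hy as [Hy|[Hy|Hy]].
    apply inspan_in, in_or_app; auto. rewrite <- Hy; auto. apply inspan_in, in_or_app; auto. }
  destruct (steinitz (l1 ++ l2) es) as [d [Hd [j [Hj Hdj]]]].
  - rewrite Hl, Hbs, !length_app. simpl; lia.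
  - apply Forall_forall; intros; auto.
  - apply Hdj. apply Hes; auto.
Qed.

End Lin.

Section Transfer.
Context {n : nat}.

Definition vdec (x y : vec n) : {x = y} + {x <> y} := excluded_middle_informative _.

(** Position of [x] in [L] (or [length L] if absent). *)
Fixpoint idx (x : vec n) (L : list (vec n)) : nat :=
  match L with nil => O | y :: L' => if vdec x y then O else S (idx x L') end.

Lemma idx_nth L i : NoDup L -> (i < length L)%nat -> idx (nth i L vzero) L = i.
Proof.
  revert i; induction L as [|y L IH]; intros i HN Hi; simpl in *. lia.
  inversion HN; subst. destruct i.
  - destruct (vdec y y); congruence.
  - destruct (vdec (nth i L vzero) y). subst. exfalso. apply H1. apply nth_In. lia.
    f_equal. apply IH; auto. lia.
Qed.

Lemma nth_idx L x : In x L -> nth (idx x L) L vzero = x /\ (idx x L < length L)%nat.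
Proof.
  induction L as [|y L IH]; intros H; simpl in *. contradiction.
  destruct (vdec x y). subst; split; auto; lia.
  destruct H. congruence. destruct (IH H); split; auto; lia.
Qed.

Definition lcf (f : vec n -> R) (L : list (vec n)) := lc (fun i => f (nth i L vzero)) L.

Lemma lcf_cons f x L : lcf f (x :: L) = vadd (vscal (f x) x) (lcf f L).
Proof. reflexivity. Qed.

Lemma NoDup_remove' L x : NoDup L -> NoDup (remove vdec x L).
Proof.
  induction L as [|y L IH]; intros HN; simpl. constructor. inversion HN; subst.
  destruct (vdec x y). auto. constructor; auto. intro Hin. apply in_remove in Hin. tauto.
Qed.

Lemma lcf_remove f L x : NoDup L -> In x L -> lcf f L = vadd (vscal (f x) x) (lcf f (remove vdec x L)).
Proof.
  induction L as [|y L IH]; intros HN Hx; simpl in Hx. contradiction. inversion HN; subst.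
  rewrite lcf_cons. simpl. destruct (vdec x y).
  - subst. rewrite notin_remove; auto.
  - destruct Hx as [Hx|Hx]. congruence. rewrite lcf_cons, IH; auto. vring.
Qed.

Lemma lcf_sub f : forall L2 L1, NoDup L1 -> NoDup L2 -> incl L1 L2 ->
  (forall x, In x L2 -> ~ In x L1 -> f x = 0) -> lcf f L1 = lcf f L2.
Proof.
  induction L2 as [|y L2 IH]; intros L1 H1 H2 Hinc Hz.
  - destruct L1 as [|x L1]; auto. exfalso. apply (Hinc x); simpl; auto.
  - inversion H2; subst. rewrite lcf_cons. destruct (classic (In y L1)) as [Hy|Hy].
    + rewrite (lcf_remove f L1 y H1 Hy). f_equal. apply IH; auto. apply NoDup_remove'; auto.
      * intros x Hx. apply in_remove in Hx. destruct Hx as [Hx Hxy]. apply Hinc in Hx. destruct Hx; auto. congruence.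
      * intros x Hx Hnx. apply Hz. simpl; auto. intro Hx1. apply Hnx. apply in_in_remove; auto.
        intro; subst; contradiction.
    + rewrite (Hz y) by (simpl; auto). replace (vscal 0 y) with (@vzero n) by vring.
      rewrite (IH L1); auto. vring.
      intros x Hx. assert (Hx' := Hinc x Hx). destruct Hx'; auto. subst; contradiction.
      intros x Hx Hnx. apply Hz; simpl; auto.
Qed.

Lemma lc_lcf L d : NoDup L -> lc d L = lcf (fun x => d (idx x L)) L.
Proof. intro HN. apply lc_ext. intros i Hi. rewrite idx_nth; auto. Qed.

Definition extc (S : list (vec n)) (d : nat -> R) (P : list (vec n)) : nat -> R :=
  fun j => if excluded_middle_informative (In (nth j P vzero) S) then d (idx (nth j P vzero) S) else 0.

Lemma lc_extc S P d : NoDup S -> NoDup P -> incl S P -> lc d S = lc (extc S d P) P.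
Proof.
  intros HS HP Hinc. rewrite lc_lcf by auto.
  set (f := fun x => if excluded_middle_informative (In x S) then d (idx x S) else 0).
  transitivity (lcf f S).
  - apply lc_ext. intros i Hi. unfold f. destruct (excluded_middle_informative _); auto.
    exfalso; apply n0, nth_In; auto.
  - rewrite (lcf_sub f P S); auto. intros x _ Hx. unfold f. destruct (excluded_middle_informative _); tauto.
Qed.

Lemma extc_out S P d j : ~ In (nth j P vzero) S -> extc S d P j = 0.
Proof. intro H. unfold extc. destruct (excluded_middle_informative _); tauto. Qed.

Lemma extc_in S P d i : NoDup S -> NoDup P -> incl S P -> (i < length S)%nat ->
  extc S d P (idx (nth i S vzero) P) = d i.
Proof.
  intros HS HP Hinc Hi. unfold extc. assert (Hin : In (nth i S vzero) P) by (apply Hinc, nth_In; auto).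
  destruct (nth_idx P _ Hin) as [E _]. rewrite E.
  destruct (excluded_middle_informative _). rewrite idx_nth; auto. exfalso; apply n0, nth_In; auto.
Qed.

Lemma lc_restrict S P e : NoDup S -> NoDup P -> incl S P ->
  (forall j, (j < length P)%nat -> ~ In (nth j P vzero) S -> e j = 0) ->
  lc e P = lc (fun i => e (idx (nth i S vzero) P)) S.
Proof.
  intros HS HP Hinc Hz. rewrite lc_lcf by auto. symmetry.
  change (lc (fun i => e (idx (nth i S vzero) P)) S) with (lcf (fun x => e (idx x P)) S).
  apply lcf_sub; auto. intros x Hx Hnx. destruct (nth_idx P x Hx) as [E Hl].
  apply Hz; auto. rewrite E; auto.
Qed.

End Transfer.

Section Spans.
Context {n : nat}.

Lemma eqmod0 (x y : vec n) : eqmod Kzero x y -> x = y.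
Proof.
  unfold eqmod, Kzero. intro H. apply vext; intro i. apply (vec_at _ _ i) in H.
  unfold vsub, vzero in H. lra.
Qed.

Lemma eqmod_id (K : vec n -> Prop) x : K vzero -> eqmod K x x.
Proof. intro HK. unfold eqmod. replace (vsub x x) with (@vzero n) by vring. auto. Qed.

Lemma Kline_zero (a : vec n) : Kline a vzero.
Proof. exists 0. vring. Qed.

Lemma rspan_comb (P : vec n -> Prop) x y s t : rspan P x -> rspan P y -> rspan P (vadd (vscal s x) (vscal t y)).
Proof.
  intros [p1 [c1 [H1 E1]]] [p2 [c2 [H2 E2]]]. exists (p1 ++ p2).
  exists (fun i => if Nat.ltb i (length p1) then s * c1 i else t * c2 (i - length p1)%nat).
  split. apply Forall_app; auto. rewrite lc_app.
  rewrite (lc_ext _ (fun i => s * c1 i) p1) by (intros i Hi; apply Nat.ltb_lt in Hi; rewrite Hi; auto).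
  rewrite (lc_ext _ (fun i => t * c2 i) p2).
  2:{ intros i _. replace (Nat.ltb (length p1 + i) (length p1)) with false by (symmetry; apply Nat.ltb_ge; lia).
      f_equal. f_equal. lia. }
  rewrite !lc_scal, E1, E2. auto.
Qed.

Lemma rspan_zero (P : vec n -> Prop) : rspan P vzero.
Proof. exists nil, (fun _ => 0). split; auto. Qed.

Lemma rspan_in (P : vec n -> Prop) x : P x -> rspan P x.
Proof. intro H. exists (x :: nil), (fun _ => 1). split. constructor; auto. simpl. vring. Qed.

Lemma rspan_lc (P : vec n -> Prop) L d : Forall (rspan P) L -> rspan P (lc d L).
Proof.
  revert d; induction L as [|x L IH]; intros d HF; simpl. apply rspan_zero.
  inversion HF; subst. replace (vadd (vscal (d O) x) (lc (fun i => d (S i)) L)) with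
    (vadd (vscal (d O) x) (vscal 1 (lc (fun i => d (S i)) L))) by vring.
  apply rspan_comb; auto.
Qed.

Lemma zspan_single (P : vec n -> Prop) r : P r -> zspan P r.
Proof.
  intro H. exists (r :: nil), (fun i => if Nat.eqb i 0 then 1%Z else 0%Z). split. constructor; auto.
  unfold zc; simpl. vring.
Qed.

Lemma zspan_comb (P : vec n -> Prop) x y (s t : Z) : zspan P x -> zspan P y ->
  zspan P (vadd (vscal (IZR s) x) (vscal (IZR t) y)).
Proof.
  intros [p1 [c1 [H1 E1]]] [p2 [c2 [H2 E2]]]. exists (p1 ++ p2).
  exists (fun i => if Nat.ltb i (length p1) then (s * c1 i)%Z else (t * c2 (i - length p1)%nat)%Z).
  split. apply Forall_app; auto. rewrite lc_app.
  rewrite (lc_ext _ (fun i => IZR s * zc c1 i) p1) by (intros i Hi; apply Nat.ltb_lt in Hi; unfold zc; rewrite Hi, mult_IZR; auto).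
  rewrite (lc_ext _ (fun i => IZR t * zc c2 i) p2).
  2:{ intros i _. unfold zc. replace (Nat.ltb (length p1 + i) (length p1)) with false by (symmetry; apply Nat.ltb_ge; lia).
      rewrite mult_IZR. f_equal. f_equal. f_equal. lia. }
  rewrite !lc_scal, E1, E2. auto.
Qed.

Lemma zspan_sub (P : vec n -> Prop) x y : zspan P x -> zspan P y -> zspan P (vsub x y).
Proof.
  intros Hx Hy. replace (vsub x y) with (vadd (vscal (IZR 1) x) (vscal (IZR (-1)) y)) by (simpl; vring).
  apply zspan_comb; auto.
Qed.

Lemma zspan_lc (P : vec n -> Prop) L (d : nat -> Z) : Forall P L -> zspan P (lc (zc d) L).
Proof. intro H. exists L, d. auto. Qed.

Lemma zspan_mono (P Q : vec n -> Prop) v : (forall x, P x -> Q x) -> zspan P v -> zspan Q v.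
Proof. intros H [ps [c [HF E]]]. exists ps, c. split; auto. eapply Forall_impl; eauto. Qed.

End Spans.

(** Integrality of the null lattice: if [s a ∈ ZR] with [a] part of a
    [Z]-basis [a, b] of [ZR ∩ V^0] and [ZR] free of rank [dim V], then
    [s ∈ Z].  (An [R]-dependence [b = r a] would contradict the freeness.) *)
Section NullLattice.
Context {n : nat} (B : vec n -> vec n -> R) (Rt : vec n -> Prop) (a b : vec n) (bs es : list (vec n)).
Hypothesis Hspan : forall w : vec n, exists v, rspan Rt v /\ eqmod Kzero w v.
Hypothesis Hes : indep_mod Kzero es.
Hypothesis Hlen : length es = length bs.
Hypothesis Hbs : forall z, zspan Rt z -> exists c : nat -> Z, eqmod Kzero z (lc (zc c) bs).
Hypothesis Hab : Zindep_mod Kzero (a :: b :: nil).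
Hypothesis Hnull : forall v, (zspan Rt v /\ B v v = 0) <->
       exists p q : Z, v = vadd (vscal (IZR p) a) (vscal (IZR q) b).
Hypothesis Ha0 : a <> vzero.

Lemma lattice_basis_indep : indep_mod Kzero bs.
Proof.
  apply (indep_of_spanning bs es); auto. intro u.
  destruct (Hspan u) as [v [[ps [c [HF Hv]]] Huv]]. apply eqmod0 in Huv. rewrite Huv, Hv.
  apply inspan_lc. rewrite Forall_forall in *. intros r Hr.
  destruct (Hbs r (zspan_single _ _ (HF r Hr))) as [d Hd]. apply eqmod0 in Hd. exists (zc d); auto.
Qed.

Lemma null_basis_not_collinear r : b <> vscal r a.
Proof.
  intro Hbr.
  assert (Hzb : zspan Rt b) by (apply (Hnull b); exists 0%Z, 1%Z; vring).
  assert (Hza : zspan Rt a) by (apply (Hnull a); exists 1%Z, 0%Z; vring).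
  destruct (Hbs a Hza) as [al Hal]. destruct (Hbs b Hzb) as [be Hbe].
  apply eqmod0 in Hal; apply eqmod0 in Hbe.
  assert (Hi : forall i, (i < length bs)%nat -> zc be i + (- r) * zc al i = 0).
  { apply lattice_basis_indep. unfold Kzero. rewrite lc_add, lc_scal, <- Hal, <- Hbe, Hbr. vring. }
  assert (Hex : exists i, (i < length bs)%nat /\ al i <> 0%Z).
  { apply NNPP; intro Hno. apply Ha0. rewrite Hal. apply lc_vanish.
    intros i Hi'. unfold zc. destruct (Z.eq_dec (al i) 0) as [->|Hne]; auto. exfalso; eauto. }
  destruct Hex as [i [Hi' Hali]]. apply Hali.
  refine (Hab (fun j => if Nat.eqb j 0 then (- be i)%Z else al i) _ 1%nat _); [|simpl; lia].
  unfold Kzero, zc. simpl. rewrite Hbr. specialize (Hi i Hi'). unfold zc in Hi.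
  apply vext; intro k. unfold vadd, vscal, vzero. rewrite opp_IZR.
  replace (IZR (be i)) with (r * IZR (al i)) by lra. ring.
Qed.

Lemma null_lattice_int s : zspan Rt (vscal s a) -> B (vscal s a) (vscal s a) = 0 -> is_int s.
Proof.
  intros Hz Hn. destruct (proj1 (Hnull _) (conj Hz Hn)) as [p [q Hpq]].
  destruct (Z.eq_dec q 0) as [->|Hq].
  - exists p. apply Rminus_diag_uniq, (vscal_eq0 a); auto. apply vext; intro k.
    apply (vec_at _ _ k) in Hpq. unfold vadd, vscal, vzero in *. simpl in Hpq. lra.
  - exfalso. apply (null_basis_not_collinear ((s - IZR p) / IZR q)).
    apply vext; intro k. apply (vec_at _ _ k) in Hpq. unfold vadd, vscal in *.
    apply not_0_IZR in Hq. field_simplify; auto. apply (Rmult_eq_reg_l (IZR q)); auto.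
    field_simplify; auto. lra.
Qed.

End NullLattice.

Lemma int_subgroup_cyclic (G : R -> Prop) :
  (forall s t (p q : Z), G s -> G t -> G (IZR p * s + IZR q * t)) ->
  (forall s, G s -> is_int s) -> (exists L : Z, L <> 0%Z /\ G (IZR L)) ->
  exists k : nat, (0 < k)%nat /\ G (INR k) /\ forall s, G s -> exists m : Z, s = IZR m * INR k.
Proof.
  intros Hcomb Hint [L [HL HGL]].
  set (P := fun m : nat => (0 < m)%nat /\ G (INR m)).
  assert (HP : P (Z.to_nat (Z.abs L))).
  { split. lia. rewrite INR_IZR_INZ, Z2Nat.id by lia.
    destruct (Z.abs_spec L) as [[_ ->]|[_ ->]]; auto.
    replace (IZR (- L)) with (IZR (-1) * IZR L + IZR 0 * IZR L) by (rewrite opp_IZR; simpl; ring).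
    apply Hcomb; auto. }
  destruct (dec_inh_nat_subset_has_unique_least_element P (fun m => classic (P m)) (ex_intro _ _ HP))
    as [k [[[Hk HGk] Hkmin] _]].
  exists k. split; auto. split; auto. intros s Hs.
  destruct (Hint s Hs) as [z ->]. exists (z / Z.of_nat k)%Z.
  set (r := (z mod Z.of_nat k)%Z).
  assert (Hr : (0 <= r < Z.of_nat k)%Z) by (apply Z.mod_pos_bound; lia).
  assert (Hzr : z = (Z.of_nat k * (z / Z.of_nat k) + r)%Z) by (apply Z.div_mod; lia).
  destruct (Z.eq_dec r 0) as [Hr0|Hr0].
  - rewrite Hzr at 1. rewrite Hr0, Z.add_0_r, mult_IZR, <- INR_IZR_INZ. ring.
  - exfalso. assert (HPr : P (Z.to_nat r)).
    { split. lia. rewrite INR_IZR_INZ, Z2Nat.id by lia.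
      replace (IZR r) with (IZR 1 * IZR z + IZR (- (z / Z.of_nat k)) * INR k).
      apply Hcomb; auto. rewrite INR_IZR_INZ, <- !mult_IZR, <- plus_IZR. f_equal. lia. }
    specialize (Hkmin _ HPr). lia.
Qed.

Lemma is_int_ge1 x : is_int x -> 0 < x -> 1 <= x.
Proof. intros [k ->] H. apply lt_0_IZR in H. apply IZR_le. lia. Qed.

(** Abstract root-system arguments.  [Rt] is a set of non-isotropic vectors,
    closed under its own reflections, with integral Cartan numbers and
    connected; these are the consequences of [elliptic] that are used. *)
Section RootSystem.
Context {n : nat} (B : vec n -> vec n -> R) (Rt : vec n -> Prop).
Hypothesis HB : psd_form B.
Hypothesis HRnz : forall r, Rt r -> B r r <> 0.
Hypothesis Hint : forall x y, Rt x -> Rt y -> is_int (cpair B x y).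
Hypothesis Hrefl : forall x y, Rt x -> Rt y -> Rt (refl B x y).
Hypothesis Hconn : connected_mod B Kzero Rt.

Lemma Bpos_root r : Rt r -> 0 < B r r.
Proof. intro H. pose proof (Bpos B HB r). pose proof (HRnz r H). lra. Qed.

Lemma cpair_self x : Rt x -> cpair B x x = 2.
Proof. intro Hx. unfold cpair. field. auto. Qed.

Lemma cpair_shift_r x z y s : B y y = 0 -> cpair B x (vadd z (vscal s y)) = cpair B x z.
Proof.
  intro Hy. unfold cpair. rewrite (Baddr B HB), (Bscalr B HB), (Brad_r B HB y x Hy). f_equal. ring.
Qed.

Lemma cpair_shift_l x z y : B y y = 0 -> cpair B (vadd x y) z = cpair B x z.
Proof.
  intro Hy. unfold cpair. rewrite !(Baddl B HB), !(Baddr B HB).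
  rewrite (Brad B HB y z Hy), (Brad B HB y x Hy), Hy, (Brad_r B HB y x Hy). f_equal; ring.
Qed.

Lemma cpair_refl x y : Rt x -> cpair B x (refl B x y) = - cpair B x y.
Proof.
  intro Hx. unfold refl, cpair. rewrite (Bsubr B HB), (Bscalr B HB). field. auto.
Qed.

Lemma refl_invol x y : Rt x -> refl B x (refl B x y) = y.
Proof. intro Hx. unfold refl at 1. rewrite cpair_refl by auto. unfold refl. vring. Qed.

Lemma neg_root x : Rt x -> Rt (vscal (-1) x).
Proof.
  intro H. replace (vscal (-1) x) with (refl B x x) by (unfold refl; rewrite cpair_self by auto; vring).
  apply Hrefl; auto.
Qed.

(** Composing the reflections in [b] and [b + x], [x] null, translates [d]
    by [± (b^∨, d) x]. *)
Lemma translation_step b x d : Rt b -> Rt (vadd b x) -> B x x = 0 -> Rt d ->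
  Rt (vadd d (vscal (cpair B b d) x)) /\ Rt (vadd d (vscal (- cpair B b d) x)).
Proof.
  intros Hb Hbx Hx Hd. set (c := cpair B b d). split.
  - replace (vadd d (vscal c x)) with (refl B (vadd b x) (refl B b d)); [apply Hrefl; auto|].
    unfold refl at 1. rewrite cpair_shift_l, cpair_refl by auto. unfold refl. fold c. vring.
  - replace (vadd d (vscal (- c) x)) with (refl B b (refl B (vadd b x) d)); [apply Hrefl; auto|].
    unfold refl at 2. rewrite cpair_shift_l by auto. fold c. unfold refl at 1.
    replace (vsub d (vscal c (vadd b x))) with (vadd (refl B b d) (vscal (- c) x))
      by (unfold refl; fold c; vring).
    rewrite cpair_shift_r, cpair_refl by auto. fold c. unfold refl. fold c. vring.
Qed.

Lemma translation b x d : Rt b -> Rt (vadd b x) -> B x x = 0 -> Rt d ->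
  forall m : Z, Rt (vadd d (vscal (IZR m * cpair B b d) x)).
Proof.
  intros Hb Hbx Hx Hd.
  assert (Hnat : forall p : nat, Rt (vadd d (vscal (INR p * cpair B b d) x)) /\
                                 Rt (vadd d (vscal (- INR p * cpair B b d) x))).
  { induction p.
    - simpl. replace (vadd d (vscal (0 * cpair B b d) x)) with d by vring.
      replace (vadd d (vscal (- 0 * cpair B b d) x)) with d by vring. auto.
    - destruct IHp as [H1 H2].
      destruct (translation_step b x _ Hb Hbx Hx H1) as [H3 _].
      destruct (translation_step b x _ Hb Hbx Hx H2) as [_ H4].
      rewrite cpair_shift_r in H3, H4 by auto. rewrite S_INR. split.
      + replace (vadd d (vscal ((INR p + 1) * cpair B b d) x)) with
          (vadd (vadd d (vscal (INR p * cpair B b d) x)) (vscal (cpair B b d) x)) by vring. auto.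
      + replace (vadd d (vscal (- (INR p + 1) * cpair B b d) x)) with
          (vadd (vadd d (vscal (- INR p * cpair B b d) x)) (vscal (- cpair B b d) x)) by vring. auto. }
  intro m. destruct m as [|p|p].
  - simpl. replace (vadd d (vscal (0 * cpair B b d) x)) with d by vring. auto.
  - rewrite <- positive_nat_Z, <- INR_IZR_INZ. apply Hnat.
  - rewrite <- Pos2Z.opp_pos, opp_IZR, <- positive_nat_Z, <- INR_IZR_INZ. apply Hnat.
Qed.

Lemma connected_ind (Q : vec n -> Prop) :
  (exists x, Rt x /\ Q x) ->
  (forall x y, Rt x -> Rt y -> Q x -> B x y <> 0 -> Q y) ->
  forall x, Rt x -> Q x.
Proof.
  intros [x0 [Hx0 Qx0]] Hstep x Hx. apply NNPP; intro Hn. apply Hconn.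
  exists Q. split; [|split; [|split]].
  - intros u v _ _ Huv. apply eqmod0 in Huv. subst; tauto.
  - eauto.
  - eauto.
  - intros u v Hu Hv Qu Qv. apply NNPP; intro H. apply Qv; eauto.
Qed.

Section Fundamental.
Variables (Pi : list (vec n)) (a : vec n).
Hypothesis Haa : B a a = 0.
Hypothesis Ha0 : a <> vzero.
Hypothesis HPi : Forall Rt Pi.
Hypothesis Hind : indep_mod (Kline a) Pi.
Hypothesis Hbase : forall r, Rt r -> exists c : nat -> Z,
  ((forall i, (0 <= c i)%Z) \/ (forall i, (c i <= 0)%Z)) /\ eqmod (Kline a) r (lc (zc c) Pi).

Notation np := (length Pi).
Notation pi i := (nth i Pi vzero).

Lemma pi_root i : (i < np)%nat -> Rt (pi i).
Proof. intro H. rewrite Forall_forall in HPi. apply HPi, nth_In; auto. Qed.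

Lemma Ba_x x : B a x = 0.
Proof. apply (Brad B HB); auto. Qed.
Lemma Bx_a x : B x a = 0.
Proof. apply (Brad_r B HB); auto. Qed.

Lemma null_add_a y s : B y y = 0 -> B (vadd y (vscal s a)) (vadd y (vscal s a)) = 0.
Proof.
  intro H. rewrite (Baddl B HB), !(Baddr B HB), !(Bscall B HB), !(Bscalr B HB), Ba_x, Bx_a, H, Haa. ring.
Qed.

Lemma null_a s : B (vscal s a) (vscal s a) = 0.
Proof. rewrite (Bscall B HB), (Bscalr B HB), Haa. ring. Qed.

Lemma coord_unique c d t s : vadd (lc c Pi) (vscal t a) = vadd (lc d Pi) (vscal s a) ->
  forall i, (i < np)%nat -> c i = d i.
Proof.
  intros H i Hi. assert (c i + -1 * d i = 0); [|lra]. apply (Hind (fun j => c j + (-1) * d j)); auto.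
  exists (s - t). rewrite lc_add, lc_scal.
  apply vext; intro k. apply (vec_at _ _ k) in H. unfold vadd, vscal in *. lra.
Qed.

Lemma base_rep r : Rt r -> exists (c : nat -> Z) t,
  ((forall i, (0 <= c i)%Z) \/ (forall i, (c i <= 0)%Z)) /\ r = vadd (lc (zc c) Pi) (vscal t a).
Proof.
  intro H. destruct (Hbase r H) as [c [Hs [t Ht]]]. exists c, t. split; auto.
  apply vext; intro k. apply (vec_at _ _ k) in Ht. unfold vsub, vadd, vscal in *. lra.
Qed.

Lemma neg_rep g c t : g = vadd (lc (zc c) Pi) (vscal t a) ->
  vscal (-1) g = vadd (lc (zc (fun i => (- c i)%Z)) Pi) (vscal (- t) a).
Proof.
  intro Hrep. rewrite Hrep, (lc_ext (zc (fun i => (- c i)%Z)) (fun i => -1 * zc c i)), lc_scal. vring.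
  intros; unfold zc; rewrite opp_IZR; ring.
Qed.

Definition upd (c : nat -> Z) (i : nat) (k : Z) : nat -> Z :=
  fun j => if Nat.eqb j i then (c j - k)%Z else c j.

Lemma lc_upd c i k : (i < np)%nat ->
  lc (zc (upd c i k)) Pi = vsub (lc (zc c) Pi) (vscal (IZR k) (pi i)).
Proof.
  intro Hi. rewrite (lc_ext _ (fun j => zc c j + (- IZR k) * indv i j)).
  rewrite lc_add, lc_scal, lc_ind by auto. vring.
  intros j _. unfold zc, upd, indv. destruct (Nat.eqb j i); rewrite ?minus_IZR; ring.
Qed.

Lemma rep_upd g c t i k : (i < np)%nat -> g = vadd (lc (zc c) Pi) (vscal t a) ->
  vsub g (vscal (IZR k) (pi i)) = vadd (lc (zc (upd c i k)) Pi) (vscal t a).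
Proof. intros Hi Hrep. rewrite lc_upd, Hrep by auto. vring. Qed.

Definition posc (c : nat -> Z) := forall i, (i < np)%nat -> (0 <= c i)%Z.

Lemma height_upd c i k : (i < np)%nat -> (1 <= k)%Z -> posc c -> posc (upd c i k) ->
  (sumN np (fun j => Z.to_nat (upd c i k j)) < sumN np (fun j => Z.to_nat (c j)))%nat.
Proof.
  intros Hi Hk Hpos Hpos'. apply sumN_lt.
  - intros j Hj. unfold upd. destruct (Nat.eqb j i); [|lia]. specialize (Hpos j Hj). lia.
  - exists i. split; auto. specialize (Hpos' i Hi). unfold upd in *. rewrite Nat.eqb_refl in *. lia.
Qed.

Lemma B_rep_self g c t : g = vadd (lc (zc c) Pi) (vscal t a) ->
  B g g = sumR np (fun i => zc c i * B (pi i) g).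
Proof.
  intro Hg. rewrite Hg at 1. rewrite (Baddl B HB), (Bscall B HB), Ba_x, (Blc_l B HB). ring.
Qed.

Lemma descent g c t : Rt g -> g = vadd (lc (zc c) Pi) (vscal t a) -> posc c ->
  (exists i, (i < np)%nat /\ forall j, (j < np)%nat -> j <> i -> c j = 0%Z) \/
  (exists i k, (i < np)%nat /\ (1 <= k)%Z /\ cpair B (pi i) g = IZR k /\
     Rt (vsub g (vscal (IZR k) (pi i))) /\ posc (upd c i k)).
Proof.
  intros Hg Hrep Hpos.
  assert (Hgg : 0 < B g g) by (apply Bpos_root; auto).
  rewrite (B_rep_self g c t Hrep) in Hgg.
  destruct (classic (exists i, (i < np)%nat /\ 0 < zc c i * B (pi i) g)) as [[i [Hi Hp]]|Hno].
  2:{ exfalso. assert (sumR np (fun i => zc c i * B (pi i) g) <= 0); [|lra].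
      apply sumR_nonpos. intros i Hi. apply Rnot_lt_le. intro; apply Hno; eauto. }
  assert (Hci : 0 <= zc c i) by (apply IZR_le; apply Hpos; auto).
  assert (HBp : 0 < B (pi i) g) by (destruct (Rle_lt_or_eq_dec _ _ Hci) as [H|H]; [nra| rewrite <- H in Hp; lra]).
  assert (Hpp : 0 < B (pi i) (pi i)) by (apply Bpos_root, pi_root; auto).
  assert (Hk : 0 < cpair B (pi i) g) by (unfold cpair; apply Rdiv_lt_0_compat; lra).
  destruct (Hint (pi i) g (pi_root i Hi) Hg) as [k Hkk].
  assert (Hk1 : (1 <= k)%Z) by (rewrite Hkk in Hk; apply lt_0_IZR in Hk; lia).
  assert (Hr : Rt (vsub g (vscal (IZR k) (pi i)))) by (rewrite <- Hkk; apply Hrefl; auto; apply pi_root; auto).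
  destruct (base_rep _ Hr) as [d [s [Hs Hd]]].
  assert (Heqz : forall j, (j < np)%nat -> upd c i k j = d j).
  { intros j Hj. apply eq_IZR. apply (coord_unique (zc (upd c i k)) (zc d) t s); auto.
    rewrite <- (rep_upd g c t i k Hi Hrep). auto. }
  destruct Hs as [Hs|Hs].
  - right. exists i, k. repeat split; auto. intros j Hj. rewrite Heqz; auto.
  - left. exists i. split; auto. intros j Hj Hji. specialize (Heqz j Hj). unfold upd in Heqz.
    apply Nat.eqb_neq in Hji. rewrite Hji in Heqz. specialize (Hs j). specialize (Hpos j Hj). lia.
Qed.

(** A root supported on a single simple root [π_i] is [π_i + t a] or
    [2 π_i + t a] (integrality of [(g^∨, π_i)]). *)
Lemma singleton g c t i : Rt g -> g = vadd (lc (zc c) Pi) (vscal t a) -> posc c -> (i < np)%nat ->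
  (forall j, (j < np)%nat -> j <> i -> c j = 0%Z) ->
  g = vadd (vscal (IZR (c i)) (pi i)) (vscal t a) /\ (c i = 1 \/ c i = 2)%Z.
Proof.
  intros Hg Hrep Hpos Hi Hz.
  assert (Hg' : g = vadd (vscal (IZR (c i)) (pi i)) (vscal t a)).
  { rewrite Hrep. rewrite (lc_single Pi (zc c) i) by (auto; intros; unfold zc; rewrite Hz; auto). auto. }
  split; auto.
  assert (Hpp : 0 < B (pi i) (pi i)) by (apply Bpos_root, pi_root; auto).
  assert (Hgi : B g (pi i) = IZR (c i) * B (pi i) (pi i)).
  { rewrite Hg', (Baddl B HB), !(Bscall B HB), Ba_x. ring. }
  assert (Hgg : B g g = IZR (c i) * IZR (c i) * B (pi i) (pi i)).
  { rewrite Hg' at 1. rewrite (Baddl B HB), !(Bscall B HB), Ba_x, (Bsym B HB (pi i) g), Hgi. ring. }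
  assert (Hc1 : (1 <= c i)%Z).
  { assert (c i <> 0%Z); [|specialize (Hpos i Hi); lia].
    intro H0. pose proof (Bpos_root g Hg). rewrite Hgg, H0 in H. simpl in H. lra. }
  destruct (Hint g (pi i) Hg (pi_root i Hi)) as [m Hm].
  unfold cpair in Hm. rewrite Hgi, Hgg in Hm.
  assert (Hm' : 2 / IZR (c i) = IZR m) by (rewrite <- Hm; field; split; [lra| apply not_0_IZR; lia]).
  destruct (Z.eq_dec (c i) 1); [left; auto|]. destruct (Z.eq_dec (c i) 2); [right; auto|].
  exfalso. assert (3 <= IZR (c i)) by (apply IZR_le; lia).
  assert (H1 : 1 <= 2 / IZR (c i)) by (apply is_int_ge1; [exists m; auto| apply Rdiv_lt_0_compat; lra]).
  apply (Rmult_le_compat_r (IZR (c i))) in H1; [|lra].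
  unfold Rdiv in H1. rewrite Rmult_assoc, Rinv_l in H1 by lra. lra.
Qed.

Definition Good (s : R) := forall al, Rt al -> exists L : Z, L <> 0%Z /\
  forall y, B y y = 0 -> Rt (vadd al y) -> forall m : Z,
    Rt (vadd (vadd al y) (vscal (IZR m * IZR L * s) a)).

Definition good_at (s : R) (d : vec n) := exists C : Z, C <> 0%Z /\
  forall y, B y y = 0 -> Rt (vadd d y) -> Rt (vadd (vadd d y) (vscal (IZR C * s) a)).

Lemma good_at_seed b s : Rt b -> Rt (vadd b (vscal s a)) -> good_at s b.
Proof.
  intros Hb Hbs. exists 2%Z. split; [lia|]. intros y Hy Hby.
  pose proof (translation b (vscal s a) (vadd b y) Hb Hbs (null_a s) Hby 1%Z) as H.
  replace (cpair B b (vadd b y)) with 2 in H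
    by (replace (vadd b y) with (vadd b (vscal 1 y)) by vring; rewrite cpair_shift_r, cpair_self; auto).
  replace (vadd (vadd b y) (vscal (IZR 2 * s) a)) with (vadd (vadd b y) (vscal (IZR 1 * 2) (vscal s a))) by vring.
  auto.
Qed.

Lemma good_at_step s x z : Rt x -> Rt z -> good_at s x -> B x z <> 0 -> good_at s z.
Proof.
  intros Hx Hz [C [HC HQx]] Hxz.
  destruct (Hint x z Hx Hz) as [k Hk].
  assert (Hk0 : k <> 0%Z).
  { intro; subst. unfold cpair in Hk. apply Hxz.
    assert (B x x <> 0) by auto. apply (Rmult_eq_reg_l (2 / B x x)).
    - unfold Rdiv in *. rewrite Rmult_0_r. rewrite <- Hk. ring.
    - apply Rmult_integral_contrapositive. split; [lra| apply Rinv_neq_0_compat; auto]. }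
  exists (k * C)%Z. split; [lia|]. intros y Hy Hzy.
  assert (Hx1 : Rt (vadd x (vscal (IZR C * s) a))).
  { replace (vadd x (vscal (IZR C * s) a)) with (vadd (vadd x vzero) (vscal (IZR C * s) a)) by vring.
    apply HQx. apply (Bzerol B HB). replace (vadd x vzero) with x by vring. auto. }
  pose proof (translation x _ _ Hx Hx1 (null_a _) Hzy 1%Z) as H.
  replace (vadd z y) with (vadd z (vscal 1 y)) in H at 2 by vring.
  rewrite cpair_shift_r, Hk in H by auto.
  replace (vadd (vadd z y) (vscal (IZR (k * C) * s) a)) with
    (vadd (vadd z y) (vscal (IZR 1 * IZR k) (vscal (IZR C * s) a))) by (rewrite mult_IZR; vring).
  auto.
Qed.

Lemma Good_of_pair b s : Rt b -> Rt (vadd b (vscal s a)) -> Good s.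
Proof.
  intros Hb Hbs.
  assert (HQ : forall x, Rt x -> good_at s x).
  { apply connected_ind.
    - exists b. split; auto. apply good_at_seed; auto.
    - intros x y Hx Hy Hg Hxy. exact (good_at_step s x y Hx Hy Hg Hxy). }
  intros al Hal. destruct (HQ al Hal) as [C [HC HQa]].
  exists (2 * C)%Z. split; [lia|]. intros y Hy Hay m.
  pose proof (translation _ _ _ Hay (HQa y Hy Hay) (null_a _) Hay m) as H.
  rewrite cpair_self in H by auto.
  replace (vadd (vadd al y) (vscal (IZR m * IZR (2 * C) * s) a)) with
    (vadd (vadd al y) (vscal (IZR m * 2) (vscal (IZR C * s) a))) by (rewrite mult_IZR; vring). auto.
Qed.

Lemma Good_zero : Good 0.
Proof.
  intros al Hal. exists 1%Z. split; [lia|]. intros y _ H m.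
  replace (vadd (vadd al y) (vscal (IZR m * IZR 1 * 0) a)) with (vadd al y) by vring. auto.
Qed.

Lemma Good_comb s1 s2 (m1 m2 : Z) : Good s1 -> Good s2 -> Good (IZR m1 * s1 + IZR m2 * s2).
Proof.
  intros G1 G2 al Hal. destruct (G1 al Hal) as [L1 [HL1 H1]]. destruct (G2 al Hal) as [L2 [HL2 H2]].
  exists (L1 * L2)%Z. split; [lia|]. intros y Hy Hay m.
  set (y' := vadd y (vscal (IZR (m * m1 * L2) * IZR L1 * s1) a)).
  assert (Hay' : Rt (vadd al y')).
  { unfold y'. replace (vadd al (vadd y (vscal (IZR (m * m1 * L2) * IZR L1 * s1) a))) with
      (vadd (vadd al y) (vscal (IZR (m * m1 * L2) * IZR L1 * s1) a)) by vring. auto. }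
  replace (vadd (vadd al y) (vscal (IZR m * IZR (L1 * L2) * (IZR m1 * s1 + IZR m2 * s2)) a)) with
    (vadd (vadd al y') (vscal (IZR (m * m2 * L1) * IZR L2 * s2) a)) by (unfold y'; rewrite !mult_IZR; vring).
  apply H2; auto. apply null_add_a; auto.
Qed.

Lemma Good_opp s : Good s -> Good (- s).
Proof. intro G. replace (- s) with (IZR (-1) * s + IZR 0 * s) by (simpl; ring). apply Good_comb; auto. Qed.

(** The null part [t] of a positive root [Σ c_i π_i + t a] is good:
    descend to a root supported on one [π_i], which is [π_i + t a] or
    [2 π_i + t a]; in the latter case reflect to get [-π_i - t a]. *)
Lemma good_null_part_pos : forall N g c t, Rt g -> g = vadd (lc (zc c) Pi) (vscal t a) -> posc c ->
  (sumN np (fun i => Z.to_nat (c i)) <= N)%nat -> Good t.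
Proof.
  induction N; intros g c t Hg Hrep Hpos HN.
  - exfalso. apply (HRnz g Hg). rewrite (B_rep_self g c t Hrep). apply sumR_zero.
    intros i Hi. pose proof (sumN_ge np (fun i => Z.to_nat (c i)) i Hi) as Hle. specialize (Hpos i Hi). cbv beta in Hle.
    assert (Hci : c i = 0%Z) by lia. unfold zc. rewrite Hci. ring.
  - destruct (descent g c t Hg Hrep Hpos) as [[i [Hi Hz]]|[i [k [Hi [Hk [_ [Hr Hp]]]]]]].
    + destruct (singleton g c t i Hg Hrep Hpos Hi Hz) as [Hg' [H1|H2]].
      * apply (Good_of_pair (pi i)). apply pi_root; auto.
        rewrite Hg', H1 in Hg. replace (vadd (pi i) (vscal t a)) with (vadd (vscal (IZR 1) (pi i)) (vscal t a)) by (simpl; vring). auto.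
      * replace t with (- - t) by ring. apply Good_opp, (Good_of_pair (vscal (-1) (pi i))).
        { apply neg_root, pi_root; auto. }
        assert (Hpr : Rt (refl B g (pi i))) by (apply Hrefl; auto; apply pi_root; auto).
        assert (Hcp2 : cpair B g (pi i) = 1).
        { rewrite Hg', H2. unfold cpair. rewrite !(Baddl B HB), !(Baddr B HB), !(Bscall B HB), !(Bscalr B HB), ?Ba_x, ?Bx_a.
          field. apply HRnz, pi_root; auto. }
        unfold refl in Hpr. rewrite Hcp2 in Hpr.
        replace (vadd (vscal (-1) (pi i)) (vscal (- t) a)) with (vsub (pi i) (vscal 1 g)); auto.
        rewrite Hg', H2. vring.
    + apply (IHN _ (upd c i k) t Hr); auto. apply rep_upd; auto.
      pose proof (height_upd c i k Hi Hk Hpos Hp). lia.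
Qed.

Lemma good_null_part g : Rt g -> exists (c : nat -> Z) t, g = vadd (lc (zc c) Pi) (vscal t a) /\ Good t.
Proof.
  intro Hg. destruct (base_rep g Hg) as [c [t [[Hs|Hs] Hrep]]]; exists c, t; split; auto.
  - eapply good_null_part_pos; eauto. intros i _; auto.
  - replace t with (- - t) by ring. apply Good_opp.
    apply (good_null_part_pos (sumN np (fun i => Z.to_nat (- c i))) (vscal (-1) g) (fun i => (- c i)%Z) (- t)
             (neg_root g Hg) (neg_rep g c t Hrep)); [|apply le_n].
    intros i _; specialize (Hs i); lia.
Qed.

Lemma good_null_part_lattice (gs : list (vec n)) (m : nat -> Z) : Forall Rt gs ->
  exists (c : nat -> R) t, lc (zc m) gs = vadd (lc c Pi) (vscal t a) /\ Good t.
Proof.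
  revert m; induction gs as [|g gs IH]; intros m HF.
  - exists (fun _ => 0), 0. split; [simpl; rewrite lc_zero; vring | apply Good_zero].
  - inversion HF; subst. destruct (good_null_part g H1) as [c0 [t0 [Hg Gt0]]].
    destruct (IH (fun i => m (S i)) H2) as [c [t [Hl Gt]]].
    exists (fun i => zc m O * zc c0 i + c i), (zc m O * t0 + t). split.
    + simpl. change (fun i => zc m (S i)) with (zc (fun i => m (S i))). rewrite Hl, Hg, lc_add, lc_scal. vring.
    + replace (zc m O * t0 + t) with (IZR (m O) * t0 + IZR 1 * t) by (unfold zc; ring). apply Good_comb; auto.
Qed.

(** Part (1): [a ∈ ZR] makes [1] good, so [α + L a] is a root for some [L ≠ 0]. *)
Theorem translation_by_a (Hza : zspan Rt a) al : Rt al ->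
  exists k : Z, k <> 0%Z /\ Rt (vadd al (vscal (IZR k) a)).
Proof.
  intro Hal. destruct Hza as [gs [m [HF Ha]]].
  destruct (good_null_part_lattice gs m HF) as [c [t [Hl Gt]]]. rewrite <- Ha in Hl.
  assert (Hc : forall i, (i < np)%nat -> c i = 0).
  { apply Hind. exists (1 - t). apply vext; intro k. apply (vec_at _ _ k) in Hl.
    unfold vadd, vscal in *. lra. }
  rewrite lc_vanish in Hl by auto.
  assert (Ht : t = 1).
  { assert (1 - t = 0); [|lra]. apply (vscal_eq0 a); auto. apply vext; intro k.
    apply (vec_at _ _ k) in Hl. unfold vadd, vscal, vzero in *. lra. }
  subst t. destruct (Gt al Hal) as [L [HL HG]]. exists L. split; auto.
  assert (H := HG vzero (Bzerol B HB vzero) ltac:(replace (vadd al vzero) with al by vring; auto) 1%Z).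
  replace (vadd al (vscal (IZR L) a)) with (vadd (vadd al vzero) (vscal (IZR 1 * IZR L * 1) a)) by vring. auto.
Qed.

Definition unit_coef (i : nat) : nat -> Z := fun j => if Nat.eqb j i then 1%Z else 0%Z.

Lemma pi_rep i : (i < np)%nat -> pi i = vadd (lc (zc (unit_coef i)) Pi) (vscal 0 a).
Proof.
  intro Hi. rewrite (lc_ext _ (indv i)). rewrite lc_ind by auto. vring.
  intros j _. unfold zc, unit_coef, indv. destruct (Nat.eqb j i); auto.
Qed.

(** The base is obtuse: [(π_i, π_j) <= 0] for [i <> j], since otherwise
    [s_{π_j} π_i = π_i - k π_j] would be a root with mixed signs. *)
Lemma base_offdiag i j : (i < np)%nat -> (j < np)%nat -> i <> j -> B (pi i) (pi j) <= 0.
Proof.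
  intros Hi Hj Hij. apply Rnot_lt_le; intro Hp.
  assert (Hjj : 0 < B (pi j) (pi j)) by (apply Bpos_root, pi_root; auto).
  assert (Hk : 0 < cpair B (pi j) (pi i)) by (unfold cpair; rewrite (Bsym B HB); apply Rdiv_lt_0_compat; lra).
  destruct (Hint (pi j) (pi i) (pi_root j Hj) (pi_root i Hi)) as [k Hkk].
  assert (Hk1 : (1 <= k)%Z) by (rewrite Hkk in Hk; apply lt_0_IZR in Hk; lia).
  assert (Hr : Rt (refl B (pi j) (pi i))) by (apply Hrefl; apply pi_root; auto).
  destruct (base_rep _ Hr) as [d [s [Hs Hd]]].
  assert (Hrep : refl B (pi j) (pi i) = vadd (lc (zc (upd (unit_coef i) j k)) Pi) (vscal 0 a)).
  { unfold refl. rewrite Hkk. apply rep_upd; auto. apply pi_rep; auto. }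
  assert (Heq := coord_unique _ _ _ _ (eq_trans (eq_sym Hrep) Hd)).
  assert (Hdi := Heq i Hi). assert (Hdj := Heq j Hj). unfold zc, upd, unit_coef in Hdi, Hdj.
  rewrite Nat.eqb_refl in Hdi, Hdj. apply (proj2 (Nat.eqb_neq i j)) in Hij. rewrite Hij in Hdi.
  rewrite Nat.eqb_sym, Hij in Hdj. apply eq_IZR in Hdi. apply eq_IZR in Hdj.
  destruct Hs as [Hs|Hs]; [specialize (Hs j)|specialize (Hs i)]; lia.
Qed.

Definition suppIn (J : nat -> Prop) (c : nat -> Z) := forall i, (i < np)%nat -> ~ J i -> c i = 0%Z.

Definition orth_split (J : nat -> Prop) :=
  forall p q, (p < np)%nat -> (q < np)%nat -> J p -> ~ J q -> B (pi p) (pi q) = 0.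

Lemma orth_split_compl J : orth_split J -> orth_split (fun i => ~ J i).
Proof. intros HJ p q Hp Hq Hnp Hnq. apply NNPP in Hnq. rewrite (Bsym B HB). apply HJ; auto. Qed.

(** A simple reflection out of [J] cannot lower a root into the span of [J]:
    [(π_i, h) = 0] for [h] supported in [J] would give [(π_i^∨, g) = 2k]. *)
Lemma supp_step (J : nat -> Prop) g c t i k : orth_split J ->
  (i < np)%nat -> ~ J i -> (1 <= k)%Z -> cpair B (pi i) g = IZR k ->
  vsub g (vscal (IZR k) (pi i)) = vadd (lc (zc (upd c i k)) Pi) (vscal t a) ->
  suppIn J (upd c i k) -> False.
Proof.
  intros HJ Hi HJi Hk Hcp Hrep Hsupp.
  assert (Hg : g = vadd (vadd (lc (zc (upd c i k)) Pi) (vscal t a)) (vscal (IZR k) (pi i))).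
  { rewrite <- Hrep. vring. }
  assert (Hpp : 0 < B (pi i) (pi i)) by (apply Bpos_root, pi_root; auto).
  assert (H0 : B (pi i) (lc (zc (upd c i k)) Pi) = 0).
  { rewrite (Blc_r B HB). apply sumR_zero.
    intros j Hj. destruct (classic (J j)) as [Jj|Jj].
    - rewrite (Bsym B HB), (HJ j i); auto. ring.
    - unfold zc. rewrite Hsupp; auto. ring. }
  unfold cpair in Hcp. rewrite Hg in Hcp. rewrite !(Baddr B HB), !(Bscalr B HB), H0, Bx_a in Hcp.
  assert (E : 2 * (0 + t * 0 + IZR k * B (pi i) (pi i)) / B (pi i) (pi i) = 2 * IZR k) by (field; lra).
  rewrite E in Hcp. assert (1 <= IZR k) by (apply IZR_le; lia). lra.
Qed.

Lemma support_pos (J : nat -> Prop) : orth_split J ->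
  forall N g c t, Rt g -> g = vadd (lc (zc c) Pi) (vscal t a) -> posc c ->
  (sumN np (fun i => Z.to_nat (c i)) <= N)%nat -> suppIn J c \/ suppIn (fun i => ~ J i) c.
Proof.
  intros HJ. induction N; intros g c t Hg Hrep Hpos HN.
  - left. intros i Hi _. pose proof (sumN_ge np (fun i => Z.to_nat (c i)) i Hi) as Hle.
    specialize (Hpos i Hi). cbv beta in Hle. lia.
  - destruct (descent g c t Hg Hrep Hpos) as [[i [Hi Hz]]|[i [k [Hi [Hk [Hcp [Hr Hp]]]]]]].
    + destruct (classic (J i)); [left|right]; intros j Hj HJj; apply Hz; auto; intro; subst; auto.
    + assert (Hrep' := rep_upd g c t i k Hi Hrep).
      pose proof (height_upd c i k Hi Hk Hpos Hp) as Hlt.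
      assert (Hoff : forall P, suppIn P (upd c i k) -> P i -> suppIn P c).
      { intros P Hs Pi' j Hj HPj. assert (j <> i) by (intro; subst; auto).
        specialize (Hs j Hj HPj). unfold upd in Hs. apply Nat.eqb_neq in H. rewrite H in Hs. auto. }
      destruct (IHN _ _ _ Hr Hrep' Hp ltac:(lia)) as [Hs|Hs]; destruct (classic (J i)) as [Ji|Ji].
      * left; auto.
      * exfalso. eapply (supp_step J); eauto.
      * exfalso. eapply (supp_step (fun i => ~ J i)); eauto. apply orth_split_compl; auto.
      * right; auto.
Qed.

Lemma support (J : nat -> Prop) : orth_split J ->
  forall g c t, Rt g -> g = vadd (lc (zc c) Pi) (vscal t a) ->
  ((forall i, (0 <= c i)%Z) \/ (forall i, (c i <= 0)%Z)) ->
  suppIn J c \/ suppIn (fun i => ~ J i) c.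
Proof.
  intros HJ g c t Hg Hrep [Hs|Hs].
  - eapply (support_pos J HJ _ g c t); eauto. intros i _; auto.
  - destruct (support_pos J HJ (sumN np (fun i => Z.to_nat (- c i))) (vscal (-1) g) (fun i => (- c i)%Z) (- t)
      (neg_root g Hg) (neg_rep g c t Hrep)) as [H|H]; auto.
    + intros i _; specialize (Hs i); lia.
    + left. intros i Hi HJi. specialize (H i Hi HJi). lia.
    + right. intros i Hi HJi. specialize (H i Hi HJi). lia.
Qed.

(** The base is connected: an orthogonal splitting of [Pi] would split [R]
    into the roots supported on either side. *)
Lemma Pi_connected (J : nat -> Prop) : orth_split J ->
  forall i0 j0, (i0 < np)%nat -> (j0 < np)%nat -> J i0 -> ~ J j0 -> False.
Proof.
  intros HJ i0 j0 Hi0 Hj0 Ji0 Jj0. apply Hconn.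
  exists (fun r => exists c t, r = vadd (lc (zc c) Pi) (vscal t a) /\ suppIn J c).
  split; [|split; [|split]].
  - intros x y _ _ Hxy. apply eqmod0 in Hxy. subst; tauto.
  - exists (pi i0). split. apply pi_root; auto. exists (unit_coef i0), 0.
    split. apply pi_rep; auto. intros j _ Hj. unfold unit_coef. destruct (Nat.eqb_spec j i0); subst; auto. contradiction.
  - exists (pi j0). split. apply pi_root; auto. intros [c [t [Hrep Hs]]].
    assert (Heq := coord_unique _ _ _ _ (eq_trans (eq_sym (pi_rep j0 Hj0)) Hrep) j0 Hj0).
    unfold zc, unit_coef in Heq. rewrite Nat.eqb_refl in Heq. rewrite Hs in Heq; auto. simpl in Heq. lra.
  - intros x y Hx Hy [c [t [Hx' Hs]]] Hny.
    destruct (base_rep y Hy) as [d [s [Hsd Hy']]].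
    destruct (support J HJ y d s Hy Hy' Hsd) as [Hd|Hd]; [exfalso; apply Hny; exists d, s; auto|].
    rewrite Hx', Hy'. rewrite (Baddl B HB), !(Baddr B HB), !(Bscall B HB), !(Bscalr B HB), Ba_x, Bx_a, Ba_x.
    rewrite (B_lc_lc B HB), sumR_zero; [ring|].
    intros i Hi. destruct (classic (J i)) as [Ji|Ji].
    + rewrite sumR_zero; [ring|]. intros j Hj. destruct (classic (J j)) as [Jj|Jj].
      * unfold zc. rewrite Hd; auto. ring.
      * rewrite HJ; auto. ring.
    + unfold zc. rewrite Hs; auto. ring.
Qed.

(** The form is positive definite on the span of any proper subset of [Pi]:
    if [x = Σ e_i π_i] is null, then so is [Σ |e_i| π_i] (obtuseness), which
    lies in the radical; this forces the support of [e] to be an orthogonal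
    component of [Pi], hence empty by connectivity. *)
Lemma pos_def (e : nat -> R) : (exists j0, (j0 < np)%nat /\ e j0 = 0) ->
  B (lc e Pi) (lc e Pi) = 0 -> forall i, (i < np)%nat -> e i = 0.
Proof.
  intros [j0 [Hj0 Hej0]] Hnull.
  set (y := lc (fun i => Rabs (e i)) Pi).
  assert (Hyy : B y y <= B (lc e Pi) (lc e Pi)).
  { unfold y. rewrite !(B_lc_lc B HB). apply sumR_le. intros i Hi. rewrite <- !sumR_scal. apply sumR_le. intros j Hj.
    destruct (Nat.eq_dec i j). subst.
    - replace (Rabs (e j) * (Rabs (e j) * B (pi j) (pi j))) with ((Rabs (e j) * Rabs (e j)) * B (pi j) (pi j)) by ring.
      rewrite <- Rabs_mult, Rabs_right by nra. nra.
    - pose proof (base_offdiag i j Hi Hj n0).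
      assert (e i * e j <= Rabs (e i) * Rabs (e j)) by (rewrite <- Rabs_mult; apply Rle_abs). nra. }
  assert (Hy0 : B y y = 0) by (pose proof (Bpos B HB y); lra).
  assert (Hrad : forall j, (j < np)%nat -> sumR np (fun i => Rabs (e i) * B (pi i) (pi j)) = 0).
  { intros j Hj. rewrite <- (Blc_l B HB). apply (Brad B HB); auto. }
  assert (Hort : orth_split (fun p => e p <> 0)).
  { intros p q Hp Hq Hep Heq. apply NNPP in Heq.
    assert (Hterm : forall i, (i < np)%nat -> Rabs (e i) * B (pi i) (pi q) <= 0).
    { intros i Hi. destruct (Nat.eq_dec i q). subst. rewrite Heq, Rabs_R0. lra.
      pose proof (base_offdiag i q Hi Hq n0). pose proof (Rabs_pos (e i)). nra. }
    pose proof (sumR_zero_nonpos _ _ Hterm (Hrad q Hq) p Hp).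
    apply Rmult_integral in H. destruct H; auto. exfalso. apply (Rabs_no_R0 _ Hep); auto. }
  intros i Hi. apply NNPP; intro Hei.
  apply (Pi_connected (fun p => e p <> 0) Hort i j0); auto.
Qed.

Section Subsystem.
Hypothesis HPnd : NoDup Pi.
Hypothesis Hza : zspan Rt a.
Hypothesis HintA : forall s, zspan Rt (vscal s a) -> is_int s.
Variable SS : list (vec n).
Hypothesis HSnd : NoDup SS.
Hypothesis HSinc : incl SS Pi.
Hypothesis HSne : SS <> nil.
Hypothesis HSpr : exists x, In x Pi /\ ~ In x SS.
Hypothesis HSconn : connected_mod B Kzero (fun x => In x SS).

Definition VS := rspan (fun x => In x SS \/ x = a).
Definition RS := fun x => Rt x /\ VS x.

Lemma S_root x : In x SS -> Rt x.
Proof. intro H. rewrite Forall_forall in HPi. auto. Qed.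

Lemma S_RS x : In x SS -> RS x.
Proof. intro H. split. apply S_root; auto. apply rspan_in; auto. Qed.

Lemma S_RS_all : Forall RS SS.
Proof. apply Forall_forall. intros; apply S_RS; auto. Qed.

Lemma a_VS : VS a.
Proof. apply rspan_in; auto. Qed.

Lemma VS_iff w : VS w <-> exists d t, w = vadd (lc d SS) (vscal t a).
Proof.
  split.
  - intros [ps [c [HF E]]]. subst w. revert c; induction ps as [|x ps IH]; intros c.
    + exists (fun _ => 0), 0. simpl. rewrite lc_zero. vring.
    + inversion HF; subst. destruct (IH H2 (fun i => c (S i))) as [d [t E]].
      simpl. rewrite E. destruct H1 as [Hx|Hx].
      * destruct (nth_idx SS x Hx) as [Ex Hl].
        exists (fun i => c O * indv (idx x SS) i + d i), t.
        rewrite lc_add, lc_scal, lc_ind, Ex by auto. vring.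
      * subst x. exists d, (c O + t). vring.
  - intros [d [t E]]. exists (SS ++ a :: nil), (snoc_coef (length SS) d t).
    split; [apply Forall_app; split; [apply Forall_forall; auto | constructor; auto]|].
    rewrite lc_snoc. auto.
Qed.

Lemma S_indep d t : lc d SS = vscal t a -> forall i, (i < length SS)%nat -> d i = 0.
Proof.
  intros E i Hi. rewrite (lc_extc SS Pi d) in E by auto.
  assert (Hin : In (nth i SS vzero) Pi) by (apply HSinc, nth_In; auto).
  rewrite <- (extc_in SS Pi d i) by auto.
  apply Hind; [exists t; auto | apply (nth_idx Pi _ Hin)].
Qed.

Lemma S_indepZ (c : nat -> Z) t : lc (zc c) SS = vscal t a -> forall i, (i < length SS)%nat -> c i = 0%Z.
Proof. intros E i Hi. apply eq_IZR. apply (S_indep _ t E i Hi). Qed.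

Lemma S_a_indep d t : vadd (lc d SS) (vscal t a) = vzero ->
  (forall i, (i < length SS)%nat -> d i = 0) /\ t = 0.
Proof.
  intro E. assert (Hd : forall i, (i < length SS)%nat -> d i = 0).
  { apply (S_indep d (- t)). apply vext; intro k. apply (vec_at _ _ k) in E.
    unfold vadd, vscal, vzero in *. lra. }
  split; auto. apply (vscal_eq0 a); auto. rewrite lc_vanish in E by auto.
  rewrite <- E. vring.
Qed.

(** The null vectors of [V^S] are the multiples of [a] ([pos_def], since [SS] is proper). *)
Lemma null_VS w : VS w -> B w w = 0 -> exists t, w = vscal t a.
Proof.
  intros Hw Hn. apply VS_iff in Hw. destruct Hw as [d [t E]].
  assert (Hn' : B (lc d SS) (lc d SS) = 0).
  { rewrite E in Hn. rewrite (Baddl B HB), !(Baddr B HB), !(Bscall B HB), !(Bscalr B HB), Ba_x, Bx_a, Haa in Hn. lra. }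
  rewrite (lc_extc SS Pi d) in Hn' by auto.
  destruct HSpr as [x0 [Hx0 Hnx0]]. destruct (nth_idx Pi x0 Hx0) as [E0 Hl0].
  assert (Hz := pos_def (extc SS d Pi) ltac:(exists (idx x0 Pi); split; auto; apply extc_out; rewrite E0; auto) Hn').
  exists t. rewrite E, (lc_extc SS Pi d), lc_vanish by auto. vring.
Qed.

Lemma RSrep r : RS r -> exists c : nat -> Z, ((forall i, (0 <= c i)%Z) \/ (forall i, (c i <= 0)%Z)) /\
   exists s, r = vadd (lc (zc c) SS) (vscal s a).
Proof.
  intros [Hr Hv]. destruct (base_rep r Hr) as [cP [t [Hs Ht]]].
  apply VS_iff in Hv. destruct Hv as [d [t' E]].
  rewrite (lc_extc SS Pi d) in E by auto.
  assert (Hu := coord_unique _ _ _ _ (eq_trans (eq_sym Ht) E)).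
  exists (fun i => cP (idx (nth i SS vzero) Pi)). split.
  - destruct Hs as [Hs|Hs]; [left|right]; intro i; apply Hs.
  - exists t. rewrite Ht, (lc_restrict SS Pi (zc cP)); auto.
    intros j Hj Hn. rewrite Hu, extc_out; auto.
Qed.

Lemma zRSrep v : zspan RS v -> exists (c : nat -> Z) s, v = vadd (lc (zc c) SS) (vscal s a).
Proof.
  intros [ps [m [HF E]]]. subst v. revert m; induction ps as [|x ps IH]; intros m.
  - exists (fun _ => 0%Z), 0. simpl. rewrite lc_vanish by (intros; unfold zc; auto). vring.
  - inversion HF; subst. destruct (IH H2 (fun i => m (S i))) as [c [s E]].
    destruct (RSrep x H1) as [c0 [_ [s0 E0]]].
    exists (fun i => (m O * c0 i + c i)%Z), (zc m O * s0 + s). simpl.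
    change (fun i => zc m (S i)) with (zc (fun i => m (S i))). rewrite E, E0.
    rewrite (lc_ext (zc (fun i => (m O * c0 i + c i)%Z)) (fun i => zc m O * zc c0 i + zc c i)), lc_add, lc_scal. vring.
    intros; unfold zc; rewrite plus_IZR, mult_IZR; auto.
Qed.

Lemma S_translate : exists x L, In x SS /\ L <> 0%Z /\ RS (vadd x (vscal (IZR L) a)).
Proof.
  assert (Hx : exists x, In x SS) by (destruct SS as [|x l]; [congruence | exists x; simpl; auto]).
  destruct Hx as [x Hx]. destruct (translation_by_a Hza x (S_root x Hx)) as [L [HL HR]].
  exists x, L. repeat split; auto.
  replace (vadd x (vscal (IZR L) a)) with (vadd (vscal 1 x) (vscal (IZR L) a)) by vring.
  apply rspan_comb; [apply rspan_in; auto | apply a_VS].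
Qed.

Definition Gs (s : R) := zspan RS (vscal s a).

Lemma Gs_cyclic : exists k : nat, (0 < k)%nat /\ Gs (INR k) /\ forall s, Gs s -> exists m : Z, s = IZR m * INR k.
Proof.
  apply int_subgroup_cyclic.
  - intros s t p q H1 H2. unfold Gs. replace (vscal (IZR p * s + IZR q * t) a) with
      (vadd (vscal (IZR p) (vscal s a)) (vscal (IZR q) (vscal t a))) by vring. apply zspan_comb; auto.
  - intros s H. apply HintA. eapply zspan_mono; [|exact H]. intros x [Hx _]; auto.
  - destruct S_translate as [x [L [Hx [HL HR]]]]. exists L. split; auto.
    unfold Gs. replace (vscal (IZR L) a) with (vsub (vadd x (vscal (IZR L) a)) x) by vring.
    apply zspan_sub; apply zspan_single; auto. apply S_RS; auto.
Qed.

Lemma zRS_null_part (c : nat -> Z) s : zspan RS (vadd (lc (zc c) SS) (vscal s a)) -> Gs s.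
Proof.
  intro Hz. unfold Gs. replace (vscal s a) with (vsub (vadd (lc (zc c) SS) (vscal s a)) (lc (zc c) SS)) by vring.
  apply zspan_sub; auto. apply zspan_lc, S_RS_all.
Qed.

Lemma RS_refl x y : RS x -> RS y -> RS (refl B x y).
Proof.
  intros [Hx Vx] [Hy Vy]. split. apply Hrefl; auto. unfold refl.
  replace (vsub y (vscal (cpair B x y) x)) with (vadd (vscal 1 y) (vscal (- cpair B x y) x)) by vring.
  apply rspan_comb; auto.
Qed.

(** [R^S] is connected (modulo any [K]): roots of [R^S] are not orthogonal
    to all of [SS], and [SS] is connected. *)
Lemma RS_conn (K : vec n -> Prop) : connected_mod B K RS.
Proof.
  intros [P' [_ [[x0 [Hx0 Px0]] [[y0 [Hy0 Py0]] Hort]]]].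
  assert (Hall : (forall u, In u SS -> P' u) \/ (forall u, In u SS -> ~ P' u)).
  { apply NNPP; intro Hno. apply HSconn. exists P'. split; [|split; [|split]].
    - intros u v _ _ Huv. apply eqmod0 in Huv; subst; tauto.
    - apply NNPP; intro H1. apply Hno. right. intros u Hu Pu. apply H1; eauto.
    - apply NNPP; intro H1. apply Hno. left. intros u Hu. apply NNPP; intro Pu. apply H1; eauto.
    - intros u v Hu Hv Pu Pv. apply Hort; auto; apply S_RS; auto. }
  assert (Hzero : forall w, RS w -> (forall u, In u SS -> B u w = 0) -> False).
  { intros w [Hw Vw] Hu. apply (HRnz w Hw). apply VS_iff in Vw. destruct Vw as [d [t E]].
    rewrite E at 1. rewrite (Baddl B HB), (Bscall B HB), Ba_x, (Blc_l B HB), sumR_zero; [ring|].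
    intros i Hi. rewrite Hu. ring. apply nth_In; auto. }
  destruct Hall as [Hall|Hall].
  - apply (Hzero y0); auto. intros u Hu. apply Hort; auto. apply S_RS; auto.
  - apply (Hzero x0); auto. intros u Hu. rewrite (Bsym B HB). apply Hort; auto. apply S_RS; auto.
Qed.

Lemma VS_rspan w : VS w -> rspan RS w.
Proof.
  intro Hw. apply VS_iff in Hw. destruct Hw as [d [t ->]].
  destruct S_translate as [x [L [Hx [HL HR]]]].
  assert (Ha : rspan RS a).
  { replace a with (vadd (vscal (/ IZR L) (vadd x (vscal (IZR L) a))) (vscal (- / IZR L) x)).
    - apply rspan_comb; apply rspan_in; auto. apply S_RS; auto.
    - apply vext; intro k; unfold vadd, vscal. field. apply not_0_IZR; auto. }
  replace (vadd (lc d SS) (vscal t a)) with (vadd (vscal 1 (lc d SS)) (vscal t a)) by vring.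
  apply rspan_comb; auto. apply rspan_lc. apply Forall_forall. intros u Hu. apply rspan_in, S_RS; auto.
Qed.

Lemma RS_refl_axioms (K : vec n -> Prop) : K vzero ->
  (forall al be, RS al -> RS be -> in_mod K RS (refl B al be)) /\
  (forall al ga, RS al -> RS ga -> exists be, RS be /\ eqmod K (refl B al be) ga).
Proof.
  intro HK. split.
  - intros x y Hx Hy. exists (refl B x y). split; [apply RS_refl | apply eqmod_id]; auto.
  - intros x z Hx Hz. exists (refl B x z). split; [apply RS_refl; auto|].
    rewrite refl_invol by (destruct Hx; auto). apply eqmod_id; auto.
Qed.

Lemma VS_dim : dim_mod Kzero VS (length SS + 1).
Proof.
  exists (SS ++ a :: nil). split; [rewrite length_app; simpl; lia|]. split; [|split].
  - apply Forall_app. split. apply Forall_forall; intros; apply rspan_in; auto. constructor; auto. apply a_VS.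
  - intros c Hc i Hi. rewrite lc_app_single in Hc. destruct (S_a_indep _ _ Hc) as [Hs Ht].
    rewrite length_app in Hi. simpl in Hi. destruct (Nat.lt_ge_cases i (length SS)); auto.
    replace i with (length SS) by lia. auto.
  - intros w Hw. apply VS_iff in Hw. destruct Hw as [d [t E]].
    exists (snoc_coef (length SS) d t). rewrite lc_snoc, E. apply eqmod_id. reflexivity.
Qed.

Lemma VS_null_dim : dim_mod Kzero (fun w => VS w /\ B w w = 0) 1.
Proof.
  exists (a :: nil). split; [auto|]. split; [|split].
  - constructor; auto. split; auto. apply a_VS.
  - intros c Hc i Hi. simpl in Hi. replace i with O by lia. apply (vscal_eq0 a); auto.
    rewrite <- Hc. simpl. vring.
  - intros w [Hw Hn]. destruct (null_VS w Hw Hn) as [t E]. exists (fun _ => t).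
    rewrite E. apply eqmod0. simpl. unfold eqmod, Kzero. vring.
Qed.

Lemma RS_lattice_basis k : (0 < k)%nat -> Gs (INR k) ->
  (forall s, Gs s -> exists m : Z, s = IZR m * INR k) ->
  exists bs : list (vec n), length bs = (length SS + 1)%nat /\
     Forall (in_mod Kzero (zspan RS)) bs /\
     (forall z, zspan RS z -> exists c : nat -> Z, eqmod Kzero z (lc (zc c) bs)) /\
     Zindep_mod Kzero bs.
Proof.
  intros Hk HGk Hcyc. exists (SS ++ vscal (INR k) a :: nil).
  split; [rewrite length_app; simpl; lia|]. split; [|split].
  - apply Forall_app. split.
    + apply Forall_forall. intros x Hx. exists x. split. apply zspan_single, S_RS; auto. apply eqmod_id. reflexivity.
    + constructor; auto. exists (vscal (INR k) a). split; auto. apply eqmod_id. reflexivity.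
  - intros z Hz. destruct (zRSrep z Hz) as [c [s E]].
    destruct (Hcyc s (zRS_null_part c s ltac:(rewrite <- E; auto))) as [m Hm].
    exists (fun i => if Nat.ltb i (length SS) then c i else m).
    unfold eqmod, Kzero. rewrite lc_app_single.
    rewrite (lc_ext _ (zc c) SS) by (intros i Hi; unfold zc; apply Nat.ltb_lt in Hi; rewrite Hi; auto).
    rewrite E, Hm. unfold zc. rewrite Nat.ltb_irrefl. vring.
  - intros c Hc i Hi. unfold Kzero in Hc. rewrite lc_app_single in Hc.
    replace (vscal (zc c (length SS)) (vscal (INR k) a)) with (vscal (zc c (length SS) * INR k) a) in Hc by vring.
    destruct (S_a_indep _ _ Hc) as [Hs Ht].
    rewrite length_app in Hi. simpl in Hi. destruct (Nat.lt_ge_cases i (length SS)).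
    + apply eq_IZR, Hs; auto.
    + replace i with (length SS) by lia. apply eq_IZR. apply Rmult_integral in Ht.
      destruct Ht as [Ht|Ht]; auto. exfalso. apply (not_0_INR k); auto; lia.
Qed.

Lemma RS_affine : ears_mod B Kzero VS RS (length SS) 1.
Proof.
  destruct Gs_cyclic as [k [Hk [HGk Hcyc]]].
  destruct (RS_refl_axioms Kzero eq_refl) as [Hr1 Hr2].
  split; [|split; [|split; [|split; [|split; [|split; [|split; [|split]]]]]]]; auto.
  - intros r [Hr Vr]. auto.
  - intros w Hw. exists w. split. apply VS_rspan; auto. apply eqmod_id. reflexivity.
  - apply VS_dim.
  - apply VS_null_dim.
  - apply (RS_lattice_basis k); auto.
  - intros x y [Hx _] [Hy _]. auto.
  - apply RS_conn.
Qed.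

Lemma RS_reduced (Hred : reduced_mod Kzero Rt) : reduced_mod Kzero RS.
Proof. intros [x [y [[Hx _] [[Hy _] H]]]]. apply Hred. eauto. Qed.

Lemma RS_finite : ears_mod B (Kline a) VS RS (length SS) 0.
Proof.
  destruct (RS_refl_axioms (Kline a) (Kline_zero a)) as [Hr1 Hr2].
  split; [|split; [|split; [|split; [|split; [|split; [|split; [|split]]]]]]]; auto.
  - intros r [Hr Vr]. auto.
  - intros w Hw. exists w. split. apply VS_rspan; auto. apply eqmod_id, Kline_zero.
  - exists SS. split; [lia|]. split; [|split].
    + apply Forall_forall; intros; apply rspan_in; auto.
    + intros c [t Hc] i Hi. apply (S_indep c t Hc i Hi).
    + intros w Hw. apply VS_iff in Hw. destruct Hw as [d [t E]]. exists d, t. rewrite E. vring.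
  - exists nil. split; auto. split; [|split].
    + constructor.
    + intros c _ i Hi. simpl in Hi. lia.
    + intros w [Hw Hn]. destruct (null_VS w Hw Hn) as [t E]. exists (fun _ => 0), t. rewrite E. simpl. vring.
  - exists SS. split; [lia|]. split; [|split].
    + apply Forall_forall. intros x Hx. exists x. split. apply zspan_single, S_RS; auto. apply eqmod_id, Kline_zero.
    + intros z Hz. destruct (zRSrep z Hz) as [c [s E]]. exists c, s. rewrite E. vring.
    + intros c [t Hc] i Hi. apply (S_indepZ c t Hc i Hi).
  - intros x y [Hx _] [Hy _]. auto.
  - apply RS_conn.
Qed.

Lemma RS_base : base_mod (Kline a) RS (length SS) 0 SS.
Proof.
  split; [lia|]. split; [|split].
  - apply Forall_forall. intros x Hx. exists x. split. apply S_RS; auto. apply eqmod_id, Kline_zero.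
  - intros c [t Hc] i Hi. apply (S_indep c t Hc i Hi).
  - intros r Hr. destruct (RSrep r Hr) as [c [Hs [s E]]]. exists c. split; auto. exists s. rewrite E. vring.
Qed.

Lemma RS_lattice : exists k : nat,
  (forall v, zspan RS v <->
     exists (c : nat -> Z) (m : Z), v = vadd (lc (zc c) SS) (vscal (IZR m * INR k) a)) /\
  (forall (c : nat -> Z) (m : Z), lc (zc c) SS = vscal (IZR m * INR k) a -> lc (zc c) SS = vzero).
Proof.
  destruct Gs_cyclic as [k [Hk [HGk Hcyc]]]. exists k. split.
  - intro v. split.
    + intro Hz. destruct (zRSrep v Hz) as [c [s E]].
      destruct (Hcyc s (zRS_null_part c s ltac:(rewrite <- E; auto))) as [m Hm].
      exists c, m. rewrite E, Hm. auto.
    + intros [c [m ->]]. replace (vadd (lc (zc c) SS) (vscal (IZR m * INR k) a)) with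
        (vadd (vscal (IZR 1) (lc (zc c) SS)) (vscal (IZR m) (vscal (INR k) a))) by (simpl; vring).
      apply zspan_comb; auto. apply zspan_lc, S_RS_all.
  - intros c m E. apply lc_vanish. intros i Hi. unfold zc. rewrite (S_indepZ c _ E i Hi). auto.
Qed.

End Subsystem.
End Fundamental.
End RootSystem.

Section Hypotheses.
Context {l : nat} (B : vec (l + 2) -> vec (l + 2) -> R) (Rt : vec (l + 2) -> Prop)
  (Pi : list (vec (l + 2))) (a : vec (l + 2)).
Hypothesis HB : psd_form B.
Hypothesis Hell : elliptic B Rt l.
Hypothesis Hfs : fundamental_set B Rt l Pi a.

Lemma elliptic_refl_closed x y : Rt x -> Rt y -> Rt (refl B x y).
Proof.
  intros Hx Hy. destruct Hell as [_ [_ [_ [_ [_ [_ [E7 _]]]]]]].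
  destruct (E7 x y Hx Hy) as [r [Hr E]]. apply eqmod0 in E. rewrite E; auto.
Qed.

Lemma fundamental_a_nonzero : a <> vzero.
Proof.
  destruct Hfs as [_ [_ [[b [Hab _]] _]]]. intro H0.
  assert (1%Z = 0%Z); [|lia].
  refine (Hab (fun i => if Nat.eqb i 0 then 1%Z else 0%Z) _ O _); [|simpl; lia].
  unfold Kzero, zc. simpl. rewrite H0. vring.
Qed.

Lemma fundamental_null_int s : zspan Rt (vscal s a) -> is_int s.
Proof.
  intro Hs. destruct Hell as [_ [E2 [[es [Hesl [_ [Hes _]]]] [_ [[bs [Hbsl [_ [Hbs _]]]] _]]]]].
  destruct Hfs as [_ [Haa [[b [Hab Hnull]] _]]].
  apply (null_lattice_int B Rt a b bs es); auto.
  - intro w. apply E2. exact I.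
  - congruence.
  - apply fundamental_a_nonzero.
  - rewrite (Bscall B HB), (Bscalr B HB), Haa. ring.
Qed.

End Hypotheses.

Theorem lemma4p1 (l : nat) (B : vec (l + 2) -> vec (l + 2) -> R)
  (Rt : vec (l + 2) -> Prop) (Pi : list (vec (l + 2))) (a : vec (l + 2)) :
  psd_form B -> elliptic B Rt l -> reduced_mod Kzero Rt ->
  fundamental_set B Rt l Pi a ->
  (forall al, Rt al -> exists k : Z, k <> 0%Z /\ Rt (vadd al (vscal (IZR k) a))) /\
  (forall S : list (vec (l + 2)),
     NoDup S -> incl S Pi -> S <> nil -> (exists x, In x Pi /\ ~ In x S) ->
     connected_mod B Kzero (fun x => In x S) ->
     let VS := rspan (fun x => In x S \/ x = a) in
     let RS := fun x => Rt x /\ VS x in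
     (exists l', ears_mod B Kzero VS RS l' 1) /\ reduced_mod Kzero RS /\
     (exists l'', ears_mod B (Kline a) VS RS l'' 0 /\ base_mod (Kline a) RS l'' 0 S) /\
     (exists k : nat,
        (forall v, zspan RS v <->
           exists (c : nat -> Z) (m : Z), v = vadd (lc (zc c) S) (vscal (IZR m * INR k) a)) /\
        (forall (c : nat -> Z) (m : Z), lc (zc c) S = vscal (IZR m * INR k) a -> lc (zc c) S = vzero))).
Proof.
  intros HB Hell Hred Hfs.
  pose proof (elliptic_refl_closed B Rt Hell) as Hrefl.
  pose proof (fundamental_a_nonzero B Rt Pi a Hfs) as Ha0.
  pose proof (fundamental_null_int B Rt Pi a HB Hell Hfs) as HintA.
  destruct Hell as [E1 [_ [_ [_ [_ [Hint [_ [_ Hconn]]]]]]]].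
  assert (HRnz : forall r, Rt r -> B r r <> 0) by (intros r Hr; apply E1; auto).
  destruct Hfs as [Hza [Haa [_ [HPi [HPnd [_ [_ [_ [_ [Hind Hbase]]]]]]]]]].
  split; [exact (translation_by_a B Rt HB HRnz Hint Hrefl Hconn Pi a Haa Ha0 HPi Hind Hbase Hza)|].
  intros S HSnd HSinc HSne HSpr HSconn VS RS.
  split; [|split; [|split]].
  - exists (length S). eapply RS_affine; eauto.
  - apply (RS_reduced Rt a S Hred).
  - exists (length S). split; [eapply RS_finite | eapply RS_base]; eauto.
  - eapply RS_lattice; eauto.
Qed.
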